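(* Let $\alpha_*:[p,q]\to\mathbb{R}^2$ be a (not necessarily closed) smooth regular curve in $\mathbb{R}^2=\{t=0\}\subset\mathbb{R}^{1+2}$ with unit tangent vector field $U_*$, and let $V_* = \partial_t + \beta_*$ be a smooth timelike vector field along $\alpha_*$ normal to $\alpha_*$ (so $\beta_*:[p,q]\to\mathbb{R}^2$ is normal to $\alpha_*$ with $|\beta_*|<1$). Let $\partial_t + a_*$ and $-\partial_t + b_*$ be the null vector fields in the span of $\{U_*,V_*\}$ such that $\langle a_*,U_*\rangle>0$ and $\langle b_*,U_*\rangle>0$. Define the timelikeness index \[ j(\alpha_*,\beta_* ) = L(\alpha_* )\left\{\int_{\alpha_*}\frac{1}{\sqrt{1-|\beta_*|^2}}\,|d\alpha_*|\right\}^{-1}\in(0,1], \] where $L(\alpha_* )$ is the length of $\alpha_*$. If \[ j(\alpha_*,\beta_* ) > \frac32\int_{\alpha_*}\big[|\nabla_{U_*}a_*| + |\nabla_{U_*}b_*|\big]\,|d\alpha_*|, \] then, with $T = L(\alpha_* )/j(\alpha_*,\beta_* )$, there exist two smooth functions $p(\cdot),q(\cdot):[0,T]\to\mathbb{R}$ with $p(0)=p$, $q(0)=q$, $p(T)=q(T)$, and a map $\gamma:\Omega\to\mathbb{R}^2$ with $\Omega=\{(t,x): t\in[0,T],\ x\in[p(t),q(t)]\}$ such that the map $(t,x)\mapsto(t,\gamma(t,x))$ defines a regular timelike maximal surface which contains $\alpha_*$, is tangential to $V_*$ along $\alpha_*$, and whose lateral boundary consists of two null curves.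
   Context: $\mathbb{R}^{1+2}$ is Minkowski space with metric $-dt^2+(dx^1)^2+(dx^2)^2$. The vectors $a_*,b_*$ are unit vectors in $\mathbb{R}^2$ (explicitly $a_* = \beta_* + \sqrt{1-|\beta_*|^2}\,U_*$ and $b_* = -\beta_* + \sqrt{1-|\beta_*|^2}\,U_*$). $\nabla_{U_*}a_*$ denotes the derivative of $a_*$ with respect to arclength along $\alpha_*$, and $\int_{\alpha_*}\cdot\,|d\alpha_*|$ denotes integration with respect to arclength. A regular timelike maximal surface is an immersed surface whose induced metric is Lorentzian and whose mean curvature vector vanishes. *)

From Stdlib Require Import Reals List.
From Coquelicot Require Import Coquelicot.
Open Scope R_scope.

Definition vec2 := (R * R)%type.
Definition dot2 (u v : vec2) : R := fst u * fst v + snd u * snd v.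
Definition norm2 (u : vec2) : R := sqrt (dot2 u u).

(* a vector of R^{1+2} is (t-component, x1-component, x2-component) *)
Record vec3 := mkV3 { v0 : R; v1 : R; v2 : R }.
Definition mink (u w : vec3) : R := - v0 u * v0 w + v1 u * v1 w + v2 u * v2 w.
Definition v3add (u w : vec3) : vec3 := mkV3 (v0 u + v0 w) (v1 u + v1 w) (v2 u + v2 w).
Definition v3scal (c : R) (u : vec3) : vec3 := mkV3 (c * v0 u) (c * v1 u) (c * v2 u).
Definition v3zero : vec3 := mkV3 0 0 0.

Definition smooth1 (f : R -> R) : Prop := forall (n : nat) (x : R), ex_derive_n f n x.
Definition smooth_curve (c : R -> vec2) : Prop :=
  smooth1 (fun s => fst (c s)) /\ smooth1 (fun s => snd (c s)).

Definition dT (f : R -> R -> R) : R -> R -> R := fun t x => Derive (fun s => f s x) t.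
Definition dX (f : R -> R -> R) : R -> R -> R := fun t x => Derive (fun y => f t y) x.

Fixpoint Dlist (l : list bool) (f : R -> R -> R) : R -> R -> R :=
  match l with
  | nil => f
  | b :: l' => if b then dT (Dlist l' f) else dX (Dlist l' f)
  end.

Definition smooth2 (f : R -> R -> R) : Prop :=
  forall l : list bool,
    (forall t x, ex_derive (fun s => Dlist l f s x) t /\ ex_derive (fun y => Dlist l f t y) x) /\
    (forall z : R * R, continuous (fun w : R * R => Dlist l f (fst w) (snd w)) z).

Definition smooth_map2 (g : R -> R -> vec2) : Prop :=
  smooth2 (fun t x => fst (g t x)) /\ smooth2 (fun t x => snd (g t x)).

Definition dcurve (c : R -> vec2) (s : R) : vec2 :=
  (Derive (fun r => fst (c r)) s, Derive (fun r => snd (c r)) s).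

Definition unitT (al : R -> vec2) (s : R) : vec2 :=
  let d := dcurve al s in (fst d / norm2 d, snd d / norm2 d).

Definition avec (al be : R -> vec2) (s : R) : vec2 :=
  let k := sqrt (1 - (norm2 (be s))^2) in
  (fst (be s) + k * fst (unitT al s), snd (be s) + k * snd (unitT al s)).
Definition bvec (al be : R -> vec2) (s : R) : vec2 :=
  let k := sqrt (1 - (norm2 (be s))^2) in
  (- fst (be s) + k * fst (unitT al s), - snd (be s) + k * snd (unitT al s)).

(* nabla_{U_star} c : derivative with respect to arclength along al *)
Definition nablaU (al : R -> vec2) (c : R -> vec2) (s : R) : vec2 :=
  let d := dcurve c s in
  (fst d / norm2 (dcurve al s), snd d / norm2 (dcurve al s)).

Definition arcInt (al : R -> vec2) (p q : R) (f : R -> R) : R :=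
  RInt (fun s => f s * norm2 (dcurve al s)) p q.

Definition length (al : R -> vec2) (p q : R) : R := arcInt al p q (fun _ => 1).

Definition jindex (al be : R -> vec2) (p q : R) : R :=
  length al p q / arcInt al p q (fun s => / sqrt (1 - (norm2 (be s))^2)).

Definition g1 (ga : R -> R -> vec2) := fun t x => fst (ga t x).
Definition g2 (ga : R -> R -> vec2) := fun t x => snd (ga t x).

Definition Xt (ga : R -> R -> vec2) t x : vec3 := mkV3 1 (dT (g1 ga) t x) (dT (g2 ga) t x).
Definition Xx (ga : R -> R -> vec2) t x : vec3 := mkV3 0 (dX (g1 ga) t x) (dX (g2 ga) t x).
Definition Xtt (ga : R -> R -> vec2) t x : vec3 :=
  mkV3 0 (dT (dT (g1 ga)) t x) (dT (dT (g2 ga)) t x).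
Definition Xtx (ga : R -> R -> vec2) t x : vec3 :=
  mkV3 0 (dX (dT (g1 ga)) t x) (dX (dT (g2 ga)) t x).
Definition Xxx (ga : R -> R -> vec2) t x : vec3 :=
  mkV3 0 (dX (dX (g1 ga)) t x) (dX (dX (g2 ga)) t x).

Definition gtt ga t x := mink (Xt ga t x) (Xt ga t x).
Definition gtx ga t x := mink (Xt ga t x) (Xx ga t x).
Definition gxx ga t x := mink (Xx ga t x) (Xx ga t x).
Definition gdet ga t x := gtt ga t x * gxx ga t x - (gtx ga t x)^2.
Definition itt ga t x := gxx ga t x / gdet ga t x.
Definition itx ga t x := - gtx ga t x / gdet ga t x.
Definition ixx ga t x := gtt ga t x / gdet ga t x.

Definition regular_at ga t x : Prop :=
  forall c1 c2 : R, v3add (v3scal c1 (Xt ga t x)) (v3scal c2 (Xx ga t x)) = v3zero ->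
    c1 = 0 /\ c2 = 0.
(* timelike: induced metric Lorentzian (2x2 symmetric with negative determinant) *)
Definition timelike_at ga t x : Prop := gdet ga t x < 0.

Definition nproj ga t x (v : vec3) : vec3 :=
  let at_ := mink v (Xt ga t x) in
  let ax := mink v (Xx ga t x) in
  let ct := itt ga t x * at_ + itx ga t x * ax in
  let cx := itx ga t x * at_ + ixx ga t x * ax in
  v3add v (v3scal (-1) (v3add (v3scal ct (Xt ga t x)) (v3scal cx (Xx ga t x)))).

Definition meanCurv ga t x : vec3 :=
  v3scal (1/2) (nproj ga t x
    (v3add (v3scal (itt ga t x) (Xtt ga t x))
      (v3add (v3scal (2 * itx ga t x) (Xtx ga t x))
             (v3scal (ixx ga t x) (Xxx ga t x))))).

Definition maximal_at ga t x : Prop := meanCurv ga t x = v3zero.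

Definition Omega (P Q : R -> R) (T : R) (t x : R) : Prop :=
  0 <= t <= T /\ P t <= x <= Q t.

Definition null_boundary (ga : R -> R -> vec2) (c : R -> R) (T : R) : Prop :=
  forall t, 0 <= t <= T ->
    let w := mkV3 1 (Derive (fun s => g1 ga s (c s)) t) (Derive (fun s => g2 ga s (c s)) t) in
    mink w w = 0.

(* In characteristic coordinates a timelike maximal surface in R^{1+2} is given by d'Alembert's formula
     (t, x) |-> (t, A(u) + B(v)),   u = t + lam x + c,   v = lam x + c,
   with A and B unit-speed plane curves: the lines x = const and u = const are null, and the surface is
   regular and timelike exactly where A'(u) + B'(v) <> 0.  Containing alpha and being tangent to V forces
   A' = a and B' = b, the two null directions of the data, once alpha is reparametrized with density
   |alpha'| / (2 k), k = sqrt (1 - |beta|^2); the total parameter length is then L / (2 j) = T / 2.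
   A triangle reaching time T needs data on a parameter interval of length T, so a and b are extended past
   the endpoints of alpha by composing them with smooth clamps.  Transversality follows from
     |a(s) + b(s')| >= 2 k(s1) - int |a'| - int |b'| >= 2 j - int (|a'| + |b'|) > 0,
   where k(s1) >= j because j is a weighted harmonic mean of k. *)

From Stdlib Require Import Reals Lra Lia FunctionalExtensionality Classical ClassicalEpsilon.
From Stdlib Require List.
From Coquelicot Require Import Coquelicot.
Open Scope list_scope.
Open Scope R_scope.

(** * Smooth functions of one variable *)

Fixpoint Cn (n : nat) (f : R -> R) : Prop :=
  match n with
  | O => True
  | S m => (forall x, ex_derive f x) /\ Cn m (Derive f)
  end.

Definition Cinf (f : R -> R) : Prop := forall n, Cn n f.

Lemma is_derive_eq (f : R -> R) (x l l' : R) : is_derive f x l -> l = l' -> is_derive f x l'.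
Proof. now intros H <-. Qed.

(* Coquelicot's derivative rules instantiated at [R -> R]: the generic statements do not unify with such goals. *)
Lemma is_derive_id (x : R) : is_derive (fun y => y) x 1.
Proof. apply is_derive_Reals, derivable_pt_lim_id. Qed.

Lemma is_derive_const_R (c x : R) : is_derive (fun _ => c) x 0.
Proof. apply is_derive_Reals, derivable_pt_lim_const. Qed.

Lemma is_derive_plus_R (f g : R -> R) x a b :
  is_derive f x a -> is_derive g x b -> is_derive (fun y => f y + g y) x (a + b).
Proof. intros; apply (is_derive_plus f g x a b); auto. Qed.

Lemma is_derive_opp_R (f : R -> R) x a : is_derive f x a -> is_derive (fun y => - f y) x (- a).
Proof. intros; apply (is_derive_opp f x a); auto. Qed.

Lemma is_derive_mult_R (f g : R -> R) x a b :
  is_derive f x a -> is_derive g x b -> is_derive (fun y => f y * g y) x (a * g x + f x * b).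
Proof. intros Hf Hg; apply (is_derive_mult f g x a b Hf Hg), Rmult_comm. Qed.

Lemma is_derive_comp_R (f g : R -> R) x a b :
  is_derive f (g x) a -> is_derive g x b -> is_derive (fun y => f (g y)) x (b * a).
Proof. intros; apply (is_derive_comp f g x a b); auto. Qed.

Lemma Cn_ext n : forall f g, (forall x, f x = g x) -> Cn n f -> Cn n g.
Proof.
induction n as [|n IH]; cbn; auto.
intros f g E [Df Hf]; split.
- intro x; apply ex_derive_ext with f; auto.
- apply IH with (Derive f); auto. intro x; apply Derive_ext; auto.
Qed.

Lemma Cn_pred n f : Cn (S n) f -> Cn n f.
Proof.
revert f; induction n as [|n IH]; cbn; auto.
intros f [Df Hf]; split; auto.
Qed.

Lemma Cn_of_is_derive n f f' : (forall x, is_derive f x (f' x)) -> Cn n f' -> Cn (S n) f.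
Proof.
intros D H; split.
- intro x; eexists; apply D.
- apply Cn_ext with f'; auto. intro x; symmetry; apply is_derive_unique, D.
Qed.

Lemma Cn_const n : forall c, Cn n (fun _ => c).
Proof.
induction n as [|n IH]; cbn; auto.
intro c; apply (Cn_of_is_derive n _ (fun _ => 0)); auto. intro; apply is_derive_const_R.
Qed.

Lemma Cn_id n : Cn n (fun x => x).
Proof.
destruct n; cbn; auto.
apply (Cn_of_is_derive n _ (fun _ => 1)); [apply is_derive_id|apply Cn_const].
Qed.

Lemma Cn_plus n : forall f g, Cn n f -> Cn n g -> Cn n (fun x => f x + g x).
Proof.
induction n as [|n IH]; cbn; auto.
intros f g [Df Hf] [Dg Hg].
apply (Cn_of_is_derive n _ (fun x => Derive f x + Derive g x)); auto.
intro x; apply is_derive_plus_R; apply Derive_correct; auto.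
Qed.

Lemma Cn_opp n : forall f, Cn n f -> Cn n (fun x => - f x).
Proof.
induction n as [|n IH]; cbn; auto.
intros f [Df Hf].
apply (Cn_of_is_derive n _ (fun x => - Derive f x)); auto.
intro x; apply is_derive_opp_R, Derive_correct; auto.
Qed.

Lemma Cn_mult n : forall f g, Cn n f -> Cn n g -> Cn n (fun x => f x * g x).
Proof.
induction n as [|n IH]; cbn; auto.
intros f g [Df Hf] [Dg Hg].
apply (Cn_of_is_derive n _ (fun x => Derive f x * g x + f x * Derive g x)).
- intro x; apply is_derive_mult_R; apply Derive_correct; auto.
- apply Cn_plus; apply IH; auto; apply Cn_pred; split; auto.
Qed.

Lemma Cn_comp n : forall f g, Cn n f -> Cn n g -> Cn n (fun x => f (g x)).
Proof.
induction n as [|n IH]; cbn; auto.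
intros f g [Df Hf] [Dg Hg].
apply (Cn_of_is_derive n _ (fun x => Derive g x * Derive f (g x))).
- intro x; apply is_derive_comp_R; apply Derive_correct; auto.
- apply Cn_mult; auto. apply IH; auto. apply Cn_pred; split; auto.
Qed.

Lemma Cn_inv n : forall f, (forall x, f x <> 0) -> Cn n f -> Cn n (fun x => / f x).
Proof.
induction n as [|n IH]; cbn; auto.
intros f Hnz [Df Hf].
apply (Cn_of_is_derive n _ (fun x => - Derive f x * (/ f x * / f x))).
- intro x. apply (is_derive_eq _ _ _ _ (is_derive_inv f x _ (Derive_correct _ _ (Df x)) (Hnz x))).
  field; auto.
- apply Cn_mult; [apply Cn_opp; auto|].
  assert (Cn n (fun x => / f x)) by (apply IH; auto; apply Cn_pred; split; auto).
  apply Cn_mult; auto.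
Qed.

Lemma Cn_sqrt n : forall f, (forall x, 0 < f x) -> Cn n f -> Cn n (fun x => sqrt (f x)).
Proof.
induction n as [|n IH]; cbn; auto.
intros f Hpos [Df Hf].
apply (Cn_of_is_derive n _ (fun x => Derive f x * / (2 * sqrt (f x)))).
- intro x. exact (is_derive_sqrt f x _ (Derive_correct _ _ (Df x)) (Hpos x)).
- apply Cn_mult; auto. apply Cn_inv.
  + intro x; generalize (sqrt_lt_R0 _ (Hpos x)); lra.
  + apply Cn_mult; [apply Cn_const|]. apply IH; auto. apply Cn_pred; split; auto.
Qed.


Section Cinf_closure.
Variables f g : R -> R.
Hypotheses (Hf : Cinf f) (Hg : Cinf g).

Lemma Cinf_plus : Cinf (fun x => f x + g x).
Proof. intro n; apply Cn_plus; auto. Qed.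

Lemma Cinf_opp : Cinf (fun x => - f x).
Proof. intro n; apply Cn_opp; auto. Qed.

Lemma Cinf_minus : Cinf (fun x => f x - g x).
Proof. intro n; apply Cn_plus; [|apply Cn_opp]; auto. Qed.

Lemma Cinf_mult : Cinf (fun x => f x * g x).
Proof. intro n; apply Cn_mult; auto. Qed.

Lemma Cinf_comp : Cinf (fun x => f (g x)).
Proof. intro n; apply Cn_comp; auto. Qed.

Lemma Cinf_div : (forall x, g x <> 0) -> Cinf (fun x => f x / g x).
Proof. intros Hnz n; apply Cn_mult, Cn_inv; auto. Qed.

Lemma Cinf_sqrt : (forall x, 0 < f x) -> Cinf (fun x => sqrt (f x)).
Proof. intros Hpos n; apply Cn_sqrt; auto. Qed.

Lemma Cinf_Derive : Cinf (Derive f).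
Proof. intro n; apply (Hf (S n)). Qed.

Lemma Cinf_is_derive x : is_derive f x (Derive f x).
Proof. apply Derive_correct, (Hf 1%nat). Qed.

Lemma Cinf_continuous x : continuous f x.
Proof. apply (ex_derive_continuous (K := R_AbsRing) (V := R_NormedModule)), (Hf 1%nat). Qed.

End Cinf_closure.

Lemma Cinf_const c : Cinf (fun _ => c).
Proof. intro n; apply Cn_const. Qed.

Lemma Cinf_id : Cinf (fun x => x).
Proof. intro n; apply Cn_id. Qed.

Lemma Cinf_of_is_derive f f' : (forall x, is_derive f x (f' x)) -> Cinf f' -> Cinf f.
Proof. intros D Hf' [|n]; [exact I|]. apply Cn_of_is_derive with f'; auto. Qed.

Lemma Derive_n_S_Derive f n x : Derive_n f (S n) x = Derive_n (Derive f) n x.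
Proof. rewrite <- Nat.add_1_r, <- Derive_n_comp; reflexivity. Qed.

Lemma Cinf_smooth1 f : Cinf f <-> smooth1 f.
Proof.
split.
- intros Hf n; revert f Hf; induction n as [|n IH]; intros f Hf x; cbn; auto.
  destruct n as [|n]; [apply (Hf 1%nat)|].
  apply ex_derive_ext with (Derive_n (Derive f) n).
  + intro t; symmetry; apply Derive_n_S_Derive.
  + apply (IH (Derive f) (Cinf_Derive f Hf) x).
- intros Hf n; revert f Hf; induction n as [|n IH]; intros f Hf; cbn; auto.
  split; [intro x; apply (Hf 1%nat)|].
  apply IH. intros [|m] x; cbn; [auto|].
  apply ex_derive_ext with (Derive_n f (S m)); [intro t; apply Derive_n_S_Derive|].
  apply (Hf (S (S m))).
Qed.

(** * Flat functions, plateaus and clamps *)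

Fixpoint poly_eval (l : list R) (y : R) : R :=
  match l with nil => 0 | c :: l' => c + y * poly_eval l' y end.

Fixpoint poly_add (l m : list R) : list R :=
  match l, m with
  | nil, _ => m
  | _, nil => l
  | a :: l', b :: m' => (a + b) :: poly_add l' m'
  end.

Fixpoint poly_deriv (l : list R) : list R :=
  match l with nil => nil | c :: l' => poly_add l' (0 :: poly_deriv l') end.

Definition poly_scale (c : R) (l : list R) : list R := List.map (Rmult c) l.

Fixpoint poly_abs (l : list R) : R :=
  match l with nil => 0 | c :: l' => Rabs c + poly_abs l' end.

Lemma poly_eval_add l : forall m y, poly_eval (poly_add l m) y = poly_eval l y + poly_eval m y.
Proof.
induction l as [|a l IH]; intros [|b m] y; cbn; try ring.
rewrite IH; ring.
Qed.

Lemma poly_eval_scale c l y : poly_eval (poly_scale c l) y = c * poly_eval l y.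
Proof. unfold poly_scale; induction l as [|a l IH]; cbn; [|rewrite IH]; ring. Qed.

Lemma is_derive_poly_eval l y : is_derive (poly_eval l) y (poly_eval (poly_deriv l) y).
Proof.
induction l as [|c l IH]; cbn; [apply is_derive_const_R|].
rewrite poly_eval_add; cbn.
apply (is_derive_eq _ _ _ _ (is_derive_plus_R _ _ _ _ _ (is_derive_const_R c y)
  (is_derive_mult_R _ _ _ _ _ (is_derive_id y) IH))).
ring.
Qed.

Lemma poly_abs_nonneg l : 0 <= poly_abs l.
Proof. induction l; cbn; [lra|]. generalize (Rabs_pos a); lra. Qed.

Lemma poly_eval_bound l y : 0 <= y -> Rabs (poly_eval l y) <= poly_abs l * (1 + y) ^ List.length l.
Proof.
intro Hy. induction l as [|c l IH]; cbn; [rewrite Rabs_R0; lra|].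
eapply Rle_trans; [apply Rabs_triang|]. rewrite Rabs_mult, (Rabs_right y) by lra.
assert (1 <= (1 + y) ^ List.length l) by (apply pow_R1_Rle; lra).
set (P := (1 + y) ^ List.length l) in *.
generalize (Rabs_pos c) (poly_abs_nonneg l); intros.
assert (y * Rabs (poly_eval l y) <= y * (poly_abs l * P)) by (apply Rmult_le_compat_l; lra).
assert (Rabs c <= Rabs c * ((1 + y) * P)) by (rewrite <- (Rmult_1_r (Rabs c)) at 1; apply Rmult_le_compat_l; nra).
assert (0 <= poly_abs l * P) by (apply Rmult_le_pos; lra).
nra.
Qed.

Lemma exp_ge_pow (N : nat) z : (0 < N)%nat -> 0 <= z -> (z / INR N) ^ N <= exp z.
Proof.
intros HN Hz. assert (HN' : 0 < INR N) by (apply lt_0_INR; auto).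
assert (Hpow : forall (n : nat) u, exp (INR n * u) = exp u ^ n).
{ intros n u; induction n as [|n IH]; [cbn; rewrite Rmult_0_l, exp_0; auto|].
  rewrite S_INR, Rmult_plus_distr_r, Rmult_1_l, exp_plus, IH; cbn; ring. }
replace z with (INR N * (z / INR N)) at 2 by (field; lra).
rewrite Hpow. apply pow_incr. split.
- apply Rmult_le_pos; auto. left; apply Rinv_0_lt_compat; auto.
- assert (0 <= z / INR N) by (apply Rmult_le_pos; [lra|left; apply Rinv_0_lt_compat; auto]).
  destruct (Req_dec (z / INR N) 0) as [E|E]; [rewrite E, exp_0; lra|].
  left; generalize (exp_ineq1 (z / INR N) ltac:(lra)); lra.
Qed.

Lemma pow_div_exp_le (k : nat) z : 1 <= z -> z ^ k * z / exp z <= INR (k + 2) ^ (k + 2) / z.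
Proof.
intro Hz. set (N := (k + 2)%nat).
assert (HN : 0 < INR N) by (apply lt_0_INR; unfold N; lia).
assert (Hzp : 0 < (z / INR N) ^ N) by (apply pow_lt, Rdiv_lt_0_compat; lra).
apply Rle_trans with (z ^ k * z / (z / INR N) ^ N).
- apply Rmult_le_compat_l; [apply Rmult_le_pos; [apply pow_le|]; lra|].
  apply Rinv_le_contravar; auto. apply exp_ge_pow; [unfold N; lia|lra].
- right. unfold Rdiv. rewrite Rpow_mult_distr, pow_inv.
  replace (z ^ N) with (z ^ k * z * z) by (unfold N; rewrite Nat.add_comm; cbn; ring).
  assert (z ^ k <> 0) by (apply pow_nonzero; lra).
  assert (INR N ^ N <> 0) by (apply pow_nonzero; lra).
  field; repeat split; lra.
Qed.

Lemma poly_exp_decay k M eps : 0 < eps -> 0 <= M ->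
  exists Y, 0 < Y /\ forall y, Y <= y -> M * (1 + y) ^ k * y * exp (- y) < eps.
Proof.
intros He HM.
set (C := M * exp 1 * INR (k + 2) ^ (k + 2)).
assert (HC : 0 <= C).
{ unfold C; repeat apply Rmult_le_pos; auto; [left; apply exp_pos|apply pow_le, pos_INR]. }
assert (HCe : 0 <= C / eps) by (apply Rmult_le_pos; auto; left; apply Rinv_0_lt_compat; auto).
exists (C / eps + 1); split; [lra|].
intros y Hy. set (z := 1 + y).
assert (Hz : 1 <= z) by (unfold z; lra).
assert (Ez : 0 < exp z) by apply exp_pos.
assert (HMe : 0 <= M * exp 1) by (apply Rmult_le_pos; auto; left; apply exp_pos).
assert (B1 : M * z ^ k * y * exp (- y) <= M * exp 1 * (z ^ k * z / exp z)).
{ replace (exp (- y)) with (exp 1 / exp z)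
    by (unfold z, Rdiv; rewrite <- exp_Ropp, <- exp_plus; f_equal; ring).
  unfold Rdiv.
  replace (M * z ^ k * y * (exp 1 * / exp z)) with (M * exp 1 * (z ^ k * y) * / exp z) by ring.
  replace (M * exp 1 * (z ^ k * z * / exp z)) with (M * exp 1 * (z ^ k * z) * / exp z) by ring.
  apply Rmult_le_compat_r; [left; apply Rinv_0_lt_compat; auto|].
  apply Rmult_le_compat_l; auto. apply Rmult_le_compat_l; [apply pow_le|]; unfold z in *; lra. }
assert (B2 : M * exp 1 * (z ^ k * z / exp z) <= C / z).
{ replace (C / z) with (M * exp 1 * (INR (k + 2) ^ (k + 2) / z)) by (unfold C; field; lra).
  apply Rmult_le_compat_l; auto. apply pow_div_exp_le; auto. }
assert (B3 : C / z < eps).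
{ apply Rmult_lt_reg_r with z; [lra|]. unfold Rdiv.
  rewrite Rmult_assoc, Rinv_l, Rmult_1_r by lra.
  apply Rmult_lt_reg_r with (/ eps); [apply Rinv_0_lt_compat; auto|].
  replace (eps * z * / eps) with z by (field; lra). unfold Rdiv in *; unfold z; lra. }
lra.
Qed.

Definition flat (l : list R) (x : R) : R :=
  if Rlt_dec 0 x then poly_eval l (/ x) * exp (- / x) else 0.

(* [d/dx (P(1/x) e^(-1/x)) = Q(1/x) e^(-1/x)] with [Q(y) = y^2 (P(y) - P'(y))]. *)
Definition flat_deriv_poly (l : list R) : list R :=
  0 :: 0 :: poly_add l (poly_scale (-1) (poly_deriv l)).

Lemma flat_nonpos l x : x <= 0 -> flat l x = 0.
Proof. intro H; unfold flat; destruct (Rlt_dec 0 x); [lra|auto]. Qed.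

Lemma flat_pos l x : 0 < x -> flat l x = poly_eval l (/ x) * exp (- / x).
Proof. intro H; unfold flat; destruct (Rlt_dec 0 x); [auto|lra]. Qed.

Lemma is_derive_flat_0 l : is_derive (flat l) 0 0.
Proof.
apply is_derive_Reals. intros eps He.
destruct (poly_exp_decay (List.length l) (poly_abs l) eps He (poly_abs_nonneg l)) as [Y [HY HYb]].
assert (Hd : 0 < / Y) by (apply Rinv_0_lt_compat; auto).
exists (mkposreal _ Hd); cbn. intros h Hh Hhd.
rewrite Rplus_0_l, (flat_nonpos l 0), !Rminus_0_r by lra.
destruct (Rlt_dec 0 h) as [Hp|Hn]; [|rewrite flat_nonpos by lra; unfold Rdiv; rewrite Rmult_0_l, Rabs_R0; auto].
rewrite flat_pos by auto. rewrite Rabs_right in Hhd by lra.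
set (y := / h).
assert (Hy : Y <= y) by (unfold y; rewrite <- (Rinv_inv Y); apply Rinv_le_contravar; lra).
assert (Hy0 : 0 < y) by (unfold y; apply Rinv_0_lt_compat; auto).
replace (poly_eval l y * exp (- y) / h) with (poly_eval l y * y * exp (- y)) by (unfold y; field; lra).
rewrite !Rabs_mult, (Rabs_right (exp _)), (Rabs_right y) by (left; try apply exp_pos; lra).
assert (B := poly_eval_bound l y (Rlt_le _ _ Hy0)).
assert (0 < exp (- y)) by apply exp_pos.
specialize (HYb y Hy).
assert (Rabs (poly_eval l y) * y * exp (- y) <= poly_abs l * (1 + y) ^ List.length l * y * exp (- y))
  by (repeat apply Rmult_le_compat_r; lra).
lra.
Qed.

Lemma is_derive_flat l x : is_derive (flat l) x (flat (flat_deriv_poly l) x).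
Proof.
destruct (Rtotal_order x 0) as [Hx|[->|Hx]].
- rewrite flat_nonpos by lra.
  apply is_derive_ext_loc with (fun _ => 0); [|apply is_derive_const_R].
  apply locally_interval with m_infty 0; cbn; auto.
  intros y _ Hy; symmetry; apply flat_nonpos; lra.
- rewrite flat_nonpos by lra. apply is_derive_flat_0.
- rewrite flat_pos by lra.
  apply is_derive_ext_loc with (fun y => poly_eval l (/ y) * exp (- / y)).
  { apply locally_interval with 0 p_infty; cbn; auto.
    intros y Hy _; symmetry; apply flat_pos; lra. }
  assert (Hx0 : x <> 0) by lra.
  assert (Dinv : is_derive (fun y => / y) x (- / (x * x))).
  { apply (is_derive_eq _ _ _ _ (is_derive_inv (fun y => y) x 1 (is_derive_id x) Hx0)). field; auto. }
  assert (D1 := is_derive_comp_R (poly_eval l) _ x _ _ (is_derive_poly_eval l (/ x)) Dinv).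
  assert (D2 := is_derive_comp_R exp (fun y => - / y) x _ _
    (proj2 (is_derive_Reals _ _ _) (derivable_pt_lim_exp (- / x))) (is_derive_opp_R _ _ _ Dinv)).
  apply (is_derive_eq _ _ _ _ (is_derive_mult_R _ _ _ _ _ D1 D2)).
  unfold flat_deriv_poly; cbn. rewrite poly_eval_add, poly_eval_scale. field; auto.
Qed.

Lemma Cinf_flat l : Cinf (flat l).
Proof.
intro n; revert l; induction n as [|n IH]; intro l; cbn; auto.
apply (Cn_of_is_derive n _ (flat (flat_deriv_poly l))); auto. intro; apply is_derive_flat.
Qed.

Definition bump (x : R) : R := flat (1 :: nil) x.

Lemma bump_pos x : 0 < x -> 0 < bump x.
Proof. intro H; unfold bump; rewrite flat_pos by auto; cbn. rewrite Rmult_0_r, Rplus_0_r, Rmult_1_l; apply exp_pos. Qed.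

Lemma bump_nonneg x : 0 <= bump x.
Proof. destruct (Rlt_dec 0 x); [left; apply bump_pos; auto|unfold bump; rewrite flat_nonpos; lra]. Qed.

Definition step (x : R) : R := bump x / (bump x + bump (1 - x)).

Lemma step_denom_pos x : 0 < bump x + bump (1 - x).
Proof.
destruct (Rlt_dec 0 x).
- generalize (bump_pos x r) (bump_nonneg (1 - x)); lra.
- generalize (bump_pos (1 - x) ltac:(lra)) (bump_nonneg x); lra.
Qed.

Lemma Cinf_step : Cinf step.
Proof.
apply Cinf_div; [apply Cinf_flat| |intro x; generalize (step_denom_pos x); lra].
apply Cinf_plus; [apply Cinf_flat|]. apply Cinf_comp; [apply Cinf_flat|].
apply Cinf_minus; [apply Cinf_const|apply Cinf_id].
Qed.

Lemma step_nonpos x : x <= 0 -> step x = 0.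
Proof. intro H; unfold step, bump; rewrite flat_nonpos by auto; unfold Rdiv; ring. Qed.

Lemma step_ge1 x : 1 <= x -> step x = 1.
Proof.
intro H; unfold step.
replace (bump (1 - x)) with 0 by (unfold bump; rewrite flat_nonpos; lra).
field; generalize (bump_pos x ltac:(lra)); lra.
Qed.

Lemma step_range x : 0 <= step x <= 1.
Proof.
unfold step. generalize (step_denom_pos x) (bump_nonneg x) (bump_nonneg (1 - x)); intros.
split; [apply Rmult_le_pos; auto; left; apply Rinv_0_lt_compat; auto|].
apply Rmult_le_reg_r with (bump x + bump (1 - x)); auto.
unfold Rdiv; rewrite Rmult_assoc, Rinv_l; lra.
Qed.

Lemma smooth_plateau lo hi d : 0 < d ->
  exists w : R -> R, Cinf w /\ (forall s, 0 <= w s <= 1) /\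
    (forall s, lo - d / 2 <= s <= hi + d / 2 -> w s = 1) /\
    (forall s, s <= lo - d \/ hi + d <= s -> w s = 0).
Proof.
intro Hd.
assert (Hd2 : 0 < 2 / d) by (apply Rdiv_lt_0_compat; lra).
exists (fun s => step ((s - lo + d) * (2 / d)) * step ((hi + d - s) * (2 / d))).
split; [|split; [|split]].
- apply Cinf_mult; apply Cinf_comp; try apply Cinf_step;
    apply Cinf_mult; try apply Cinf_const;
    repeat first [apply Cinf_minus | apply Cinf_plus | apply Cinf_id | apply Cinf_const].
- intro s. generalize (step_range ((s - lo + d) * (2 / d))) (step_range ((hi + d - s) * (2 / d))).
  intros; split; [apply Rmult_le_pos; lra|]. rewrite <- (Rmult_1_r 1). apply Rmult_le_compat; lra.
- intros s Hs. rewrite !step_ge1; [ring| |];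
    replace 1 with ((d / 2) * (2 / d)) by (field; lra); apply Rmult_le_compat_r; lra.
- intros s [Hs|Hs].
  + rewrite (step_nonpos ((s - lo + d) * (2 / d))); [ring|].
    apply Rmult_le_0_r; lra.
  + rewrite (step_nonpos ((hi + d - s) * (2 / d))); [ring|].
    apply Rmult_le_0_r; lra.
Qed.

Lemma ex_RInt_Cinf f a b : Cinf f -> ex_RInt f a b.
Proof.
intro Hf; apply (ex_RInt_continuous (V := R_CompleteNormedModule)).
intros; apply Cinf_continuous; auto.
Qed.

Lemma is_derive_RInt_Cinf f a x : Cinf f -> is_derive (fun y => RInt f a y) x (f x).
Proof.
intro Hf; apply (is_derive_RInt f (fun y => RInt f a y) a x); [|apply Cinf_continuous; auto].
apply filter_forall; intro b. apply (RInt_correct (V := R_CompleteNormedModule)), ex_RInt_Cinf; auto.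
Qed.

Lemma Cinf_RInt f a : Cinf f -> Cinf (fun y => RInt f a y).
Proof. intro Hf; apply Cinf_of_is_derive with f; auto. intro; apply is_derive_RInt_Cinf; auto. Qed.

Lemma MVT_is_derive (c w : R -> R) : (forall s, is_derive c s (w s)) ->
  forall x y, x <= y -> exists xi, x <= xi <= y /\ c y - c x = w xi * (y - x).
Proof.
intros D x y Hxy.
destruct (MVT_gen c x y w) as [xi [H1 H2]].
- intros; apply D.
- intros; apply continuity_pt_filterlim.
  apply (ex_derive_continuous (K := R_AbsRing) (V := R_NormedModule)). eexists; apply D.
- rewrite Rmin_left, Rmax_right in H1 by auto. exists xi; auto.
Qed.

(* A smooth retraction of R onto a neighbourhood of [lo, hi]: the primitive of a plateau function. *)
Lemma smooth_clamp lo hi d : lo < hi -> 0 < d ->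
  exists c : R -> R, Cinf c /\
    (forall s, lo - d / 2 <= s <= hi + d / 2 -> c s = s) /\
    (forall s, lo - d <= c s <= hi + d) /\
    (forall s, s <= lo - d -> c s = c (lo - d)) /\
    (forall s, hi + d <= s -> c s = c (hi + d)).
Proof.
intros Hlh Hd.
destruct (smooth_plateau lo hi d Hd) as [w [Hw [Hw01 [Hw1 Hw0]]]].
set (c := fun s => lo + RInt w lo s).
assert (Dc : forall s, is_derive c s (w s)).
{ intro s. apply (is_derive_eq _ _ _ _ (is_derive_plus_R _ _ _ _ _ (is_derive_const_R lo s)
    (is_derive_RInt_Cinf w lo s Hw))). ring. }
assert (Lip : forall x y, x <= y -> 0 <= c y - c x <= y - x).
{ intros x y Hxy. destruct (MVT_is_derive c w Dc x y Hxy) as [xi [_ ->]].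
  generalize (Hw01 xi); intros; split; nra. }
assert (Id : forall s, lo - d / 2 <= s <= hi + d / 2 -> c s = s).
{ intros s Hs.
  assert (Clo : c lo = lo) by (unfold c; rewrite RInt_point; cbn; unfold zero; cbn; ring).
  destruct (Rle_dec lo s) as [Hle|Hle].
  - destruct (MVT_is_derive c w Dc lo s Hle) as [xi [Hxi E]]. rewrite Hw1 in E by lra. lra.
  - destruct (MVT_is_derive c w Dc s lo ltac:(lra)) as [xi [Hxi E]]. rewrite Hw1 in E by lra. lra. }
assert (Lo : forall s, s <= lo - d -> c s = c (lo - d)).
{ intros s Hs. destruct (MVT_is_derive c w Dc s (lo - d) Hs) as [xi [Hxi E]].
  rewrite Hw0 in E by lra. lra. }
assert (Hi : forall s, hi + d <= s -> c s = c (hi + d)).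
{ intros s Hs. destruct (MVT_is_derive c w Dc (hi + d) s Hs) as [xi [Hxi E]].
  rewrite Hw0 in E by lra. lra. }
exists c; split; [|split; [auto|split; [|auto]]].
- apply Cinf_of_is_derive with w; auto.
- intro s.
  assert (Hlo := Lip (lo - d) lo ltac:(lra)). assert (Hhi := Lip hi (hi + d) ltac:(lra)).
  rewrite (Id lo), (Id hi) in * by lra.
  destruct (Rle_dec s (lo - d)); [rewrite Lo by lra; lra|].
  destruct (Rle_dec (hi + d) s); [rewrite Hi by lra; lra|].
  assert (H1 := Lip (lo - d) s ltac:(lra)). assert (H2 := Lip s (hi + d) ltac:(lra)). lra.
Qed.

(** * Inverse functions and reparametrization *)

Lemma increasing_of_Derive_pos s : Cinf s -> (forall x, 0 < Derive s x) ->
  forall x y, x < y -> s x < s y.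
Proof.
intros Hs Hp x y Hxy.
apply (incr_function s m_infty p_infty (Derive s)); cbn; auto.
- intros; apply Cinf_is_derive; auto.
- intros; apply Hp.
Qed.

Section Inverse.
Variables s g : R -> R.
Hypotheses (Hs : Cinf s) (Hs' : forall x, 0 < Derive s x) (Hsg : forall y, s (g y) = y).

Lemma inverse_left x : g (s x) = x.
Proof.
destruct (Rtotal_order (g (s x)) x) as [H|[H|H]]; auto;
  generalize (increasing_of_Derive_pos s Hs Hs' _ _ H); rewrite Hsg; lra.
Qed.

Lemma inverse_monotone a b : a <= b -> g a <= g b.
Proof.
intro H. destruct (Rle_dec (g a) (g b)) as [|Hn]; auto.
generalize (increasing_of_Derive_pos s Hs Hs' (g b) (g a) ltac:(lra)); rewrite !Hsg; lra.
Qed.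

Lemma is_derive_inverse (y : R) : is_derive g y (/ Derive s (g y)).
Proof.
assert (Cg : continuity_pt g y).
{ apply (Ranalysis5.continuity_pt_recip_interv s g (g y - 1) (g y + 1)); [lra| | | | |].
  - intros; apply increasing_of_Derive_pos; auto.
  - intros; apply Hsg.
  - intros x H1 H2; split; [rewrite <- (inverse_left (g y - 1))|rewrite <- (inverse_left (g y + 1))];
      apply inverse_monotone; auto.
  - intros; apply continuity_pt_filterlim, Cinf_continuous; auto.
  - assert (s (g y - 1) < s (g y)) by (apply increasing_of_Derive_pos; auto; lra).
    assert (s (g y) < s (g y + 1)) by (apply increasing_of_Derive_pos; auto; lra).
    rewrite Hsg in *; lra. }
assert (Hlt : y - 1 < y + 1) by lra. assert (Hy : y - 1 < y < y + 1) by lra.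
assert (Hmon : g (y - 1) <= g y <= g (y + 1)) by (split; apply inverse_monotone; lra).
assert (L := Ranalysis5.derivable_pt_lim_recip_interv s g (y - 1) (y + 1) y
  (fun a _ => ex_derive_Reals_0 _ _ (ex_intro _ _ (Cinf_is_derive s Hs a)))
  Cg Hlt Hy Hmon (fun x _ => Hsg x)).
rewrite Derive_Reals in L.
apply is_derive_Reals. replace (/ Derive s (g y)) with (1 / Derive s (g y)) by (unfold Rdiv; ring).
apply L. generalize (Hs' (g y)); lra.
Qed.

Lemma Cinf_inverse : Cinf g.
Proof.
intro n; induction n as [|n IH]; cbn; auto.
apply (Cn_of_is_derive n _ (fun y => / Derive s (g y))); [apply is_derive_inverse|].
apply Cn_inv; [intro x; generalize (Hs' (g x)); lra|].
apply Cn_comp; auto. apply Cinf_Derive; auto.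
Qed.

End Inverse.

Section Reparametrization.
Variable F : R -> R.
Hypotheses (HF : Cinf F) (HFpos : forall y, 0 < F y)
  (HFtail : exists lo hi m, 0 < m /\ forall y, y <= lo \/ hi <= y -> m <= F y).

Definition sigma (y : R) : R := RInt F 0 y.

Lemma is_derive_sigma y : is_derive sigma y (F y).
Proof. apply is_derive_RInt_Cinf; auto. Qed.

Lemma Cinf_sigma : Cinf sigma.
Proof. apply Cinf_RInt; auto. Qed.

Lemma Derive_sigma_pos y : 0 < Derive sigma y.
Proof. rewrite (is_derive_unique _ _ _ (is_derive_sigma y)); auto. Qed.

Lemma sigma_increasing x y : x < y -> sigma x < sigma y.
Proof. apply increasing_of_Derive_pos; [apply Cinf_sigma|apply Derive_sigma_pos]. Qed.

Lemma sigma_monotone x y : x <= y -> sigma x <= sigma y.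
Proof. intros [H|<-]; [left; apply sigma_increasing; auto|lra]. Qed.

Lemma sigma_surjective y : exists x, sigma x = y.
Proof.
destruct HFtail as [lo [hi [m [Hm Htail]]]].
assert (Up : forall x, hi <= x -> sigma hi + m * (x - hi) <= sigma x).
{ intros x Hx. destruct (MVT_is_derive sigma F is_derive_sigma hi x Hx) as [xi [Hxi E]].
  generalize (Htail xi ltac:(lra)); intro. nra. }
assert (Dn : forall x, x <= lo -> sigma x <= sigma lo - m * (lo - x)).
{ intros x Hx. destruct (MVT_is_derive sigma F is_derive_sigma x lo Hx) as [xi [Hxi E]].
  generalize (Htail xi ltac:(lra)); intro. nra. }
set (a := lo - Rabs (y - sigma lo) / m - 1).
set (b := hi + Rabs (y - sigma hi) / m + 1).
assert (Ea : 0 <= Rabs (y - sigma lo) / m) by (apply Rdiv_le_0_compat; [apply Rabs_pos|auto]).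
assert (Eb : 0 <= Rabs (y - sigma hi) / m) by (apply Rdiv_le_0_compat; [apply Rabs_pos|auto]).
assert (Ha : sigma a < y).
{ assert (H := Dn a ltac:(unfold a; lra)).
  replace (m * (lo - a)) with (Rabs (y - sigma lo) + m) in H by (unfold a; field; lra).
  generalize (Rle_abs (- (y - sigma lo))); rewrite Rabs_Ropp; lra. }
assert (Hb : y < sigma b).
{ assert (H := Up b ltac:(unfold b; lra)).
  replace (m * (b - hi)) with (Rabs (y - sigma hi) + m) in H by (unfold b; field; lra).
  generalize (Rle_abs (y - sigma hi)); lra. }
destruct (IVT_gen sigma a b y) as [x [_ Hx]]; [|rewrite Rmin_left, Rmax_right; lra|exists x; auto].
intro x; apply continuity_pt_filterlim, Cinf_continuous, Cinf_sigma.
Qed.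

Definition sigma_inv (y : R) : R :=
  proj1_sig (constructive_indefinite_description _ (sigma_surjective y)).

Lemma sigma_sigma_inv y : sigma (sigma_inv y) = y.
Proof. unfold sigma_inv; destruct constructive_indefinite_description; auto. Qed.

Lemma sigma_inv_sigma x : sigma_inv (sigma x) = x.
Proof. apply inverse_left; [apply Cinf_sigma|apply Derive_sigma_pos|apply sigma_sigma_inv]. Qed.

Lemma Cinf_sigma_inv : Cinf sigma_inv.
Proof. apply Cinf_inverse with sigma; [apply Cinf_sigma|apply Derive_sigma_pos|apply sigma_sigma_inv]. Qed.

Lemma is_derive_sigma_inv y : is_derive sigma_inv y (/ F (sigma_inv y)).
Proof.
rewrite <- (is_derive_unique _ _ _ (is_derive_sigma (sigma_inv y))).
apply is_derive_inverse; [apply Cinf_sigma|apply Derive_sigma_pos|apply sigma_sigma_inv].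
Qed.

Lemma sigma_inv_between p q v : sigma p <= v <= sigma q -> p <= sigma_inv v <= q.
Proof.
intros [H1 H2]; split; apply Rnot_lt_le; intro H;
  generalize (sigma_increasing _ _ H); rewrite sigma_sigma_inv; lra.
Qed.

Definition primitive_along (a : R -> R) (v0 x0 v : R) : R := x0 + RInt (fun z => a (sigma_inv z)) v0 v.

Lemma is_derive_primitive_along a v0 x0 (v : R) : Cinf a ->
  is_derive (primitive_along a v0 x0) v (a (sigma_inv v)).
Proof.
intro Ha. apply (is_derive_eq _ _ _ _ (is_derive_plus_R _ _ _ _ _ (is_derive_const_R x0 v)
  (is_derive_RInt_Cinf (fun z => a (sigma_inv z)) v0 v ltac:(apply Cinf_comp; [auto|apply Cinf_sigma_inv])))).
ring.
Qed.

Lemma Derive_primitive_along a v0 x0 v : Cinf a -> Derive (primitive_along a v0 x0) v = a (sigma_inv v).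
Proof. intro Ha; apply is_derive_unique, is_derive_primitive_along; auto. Qed.

Lemma Cinf_primitive_along a v0 x0 : Cinf a -> Cinf (primitive_along a v0 x0).
Proof.
intro Ha; apply Cinf_of_is_derive with (fun v => a (sigma_inv v)); [intro; apply is_derive_primitive_along; auto|].
apply Cinf_comp; [auto|apply Cinf_sigma_inv].
Qed.

Lemma primitives_trace (a b al : R -> R) p q : Cinf a -> Cinf b -> Cinf al ->
  (forall s, p <= s <= q -> (a s + b s) * F s = Derive al s) ->
  forall v, sigma p <= v <= sigma q ->
  primitive_along a (sigma p) 0 v + primitive_along b (sigma p) (al p) v = al (sigma_inv v).
Proof.
intros Ha Hb Hal Hab v Hv.
set (Phi := fun v => primitive_along a (sigma p) 0 v + primitive_along b (sigma p) (al p) v - al (sigma_inv v)).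
assert (DPhi : forall u, is_derive Phi u
  (a (sigma_inv u) + b (sigma_inv u) - / F (sigma_inv u) * Derive al (sigma_inv u))).
{ intro u. apply is_derive_plus_R; [apply is_derive_plus_R|apply is_derive_opp_R].
  - apply is_derive_primitive_along; auto.
  - apply is_derive_primitive_along; auto.
  - apply is_derive_comp_R; [apply Cinf_is_derive; auto|apply is_derive_sigma_inv]. }
destruct (MVT_is_derive Phi _ DPhi (sigma p) v (proj1 Hv)) as [xi [Hxi E]].
rewrite <- Hab in E by (apply sigma_inv_between; lra).
replace (a (sigma_inv xi) + b (sigma_inv xi) - / F (sigma_inv xi) * ((a (sigma_inv xi) + b (sigma_inv xi)) * F (sigma_inv xi)))
  with 0 in E by (field; generalize (HFpos (sigma_inv xi)); lra).
assert (P0 : Phi (sigma p) = 0).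
{ unfold Phi, primitive_along. rewrite !RInt_point, sigma_inv_sigma. unfold zero; cbn. ring. }
unfold Phi in E, P0. lra.
Qed.

End Reparametrization.

(** * Maximal surfaces from two unit-speed curves *)

Section Waves.
Variables lam c : R.

(* A sum of two travelling profiles, in the characteristic coordinates [u = t + lam x + c], [v = lam x + c]. *)
Definition wave (k1 k2 : R) (f g : R -> R) (t x : R) : R :=
  k1 * f (t + lam * x + c) + k2 * g (lam * x + c).

Lemma is_derive_wave_t k1 k2 f g t x : Cinf f ->
  is_derive (fun s => wave k1 k2 f g s x) t (wave k1 0 (Derive f) (Derive g) t x).
Proof.
intro Hf. unfold wave.
assert (Du : is_derive (fun s => s + lam * x + c) t 1).
{ apply (is_derive_eq _ _ _ _ (is_derive_plus_R _ _ _ _ _ (is_derive_plus_R _ _ _ _ _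
    (is_derive_id t) (is_derive_const_R (lam * x) t)) (is_derive_const_R c t))); ring. }
apply (is_derive_eq _ _ _ _ (is_derive_plus_R _ _ _ _ _
  (is_derive_mult_R _ _ _ _ _ (is_derive_const_R k1 t) (is_derive_comp_R f _ t _ _ (Cinf_is_derive f Hf _) Du))
  (is_derive_const_R _ t))).
ring.
Qed.

Lemma is_derive_wave_x k1 k2 f g t x : Cinf f -> Cinf g ->
  is_derive (fun y => wave k1 k2 f g t y) x (wave (k1 * lam) (k2 * lam) (Derive f) (Derive g) t x).
Proof.
intros Hf Hg. unfold wave.
assert (Du : is_derive (fun y => t + lam * y + c) x lam).
{ apply (is_derive_eq _ _ _ _ (is_derive_plus_R _ _ _ _ _ (is_derive_plus_R _ _ _ _ _
    (is_derive_const_R t x) (is_derive_mult_R _ _ _ _ _ (is_derive_const_R lam x) (is_derive_id x)))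
    (is_derive_const_R c x))); ring. }
assert (Dv : is_derive (fun y => lam * y + c) x lam).
{ apply (is_derive_eq _ _ _ _ (is_derive_plus_R _ _ _ _ _
    (is_derive_mult_R _ _ _ _ _ (is_derive_const_R lam x) (is_derive_id x)) (is_derive_const_R c x))); ring. }
apply (is_derive_eq _ _ _ _ (is_derive_plus_R _ _ _ _ _
  (is_derive_mult_R _ _ _ _ _ (is_derive_const_R k1 x) (is_derive_comp_R f _ x _ _ (Cinf_is_derive f Hf _) Du))
  (is_derive_mult_R _ _ _ _ _ (is_derive_const_R k2 x) (is_derive_comp_R g _ x _ _ (Cinf_is_derive g Hg _) Dv)))).
ring.
Qed.

Lemma dT_wave k1 k2 f g : Cinf f -> dT (wave k1 k2 f g) = wave k1 0 (Derive f) (Derive g).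
Proof.
intro Hf; apply functional_extensionality; intro t; apply functional_extensionality; intro x.
apply is_derive_unique, is_derive_wave_t; auto.
Qed.

Lemma dX_wave k1 k2 f g : Cinf f -> Cinf g ->
  dX (wave k1 k2 f g) = wave (k1 * lam) (k2 * lam) (Derive f) (Derive g).
Proof.
intros Hf Hg; apply functional_extensionality; intro t; apply functional_extensionality; intro x.
apply is_derive_unique, is_derive_wave_x; auto.
Qed.

Lemma Dlist_wave l : forall k1 k2 f g, Cinf f -> Cinf g ->
  exists k1' k2' f' g', Cinf f' /\ Cinf g' /\ Dlist l (wave k1 k2 f g) = wave k1' k2' f' g'.
Proof.
induction l as [|b l IH]; intros k1 k2 f g Hf Hg.
- exists k1, k2, f, g; auto.
- destruct (IH k1 k2 f g Hf Hg) as [k1' [k2' [f' [g' [Hf' [Hg' E]]]]]].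
  cbn; rewrite E. exists (if b then k1' else k1' * lam), (if b then 0 else k2' * lam), (Derive f'), (Derive g').
  split; [apply Cinf_Derive; auto|split; [apply Cinf_Derive; auto|]].
  destruct b; [apply dT_wave|apply dX_wave]; auto.
Qed.

Lemma continuous_wave k1 k2 f g z : Cinf f -> Cinf g ->
  continuous (fun w : R * R => wave k1 k2 f g (fst w) (snd w)) z.
Proof.
intros Hf Hg. unfold wave.
apply (continuous_plus (fun w : R * R => k1 * f (fst w + lam * snd w + c))
  (fun w : R * R => k2 * g (lam * snd w + c))).
- apply (continuous_scal_r k1 (fun w : R * R => f (fst w + lam * snd w + c))).
  apply (continuous_comp (fun w : R * R => fst w + lam * snd w + c) f); [|apply Cinf_continuous; auto].
  apply (continuous_plus (fun w : R * R => fst w + lam * snd w) (fun _ => c)); [|apply continuous_const].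
  apply (continuous_plus (fun w : R * R => fst w) (fun w : R * R => lam * snd w)); [apply continuous_fst|].
  apply (continuous_scal_r lam (fun w : R * R => snd w)), continuous_snd.
- apply (continuous_scal_r k2 (fun w : R * R => g (lam * snd w + c))).
  apply (continuous_comp (fun w : R * R => lam * snd w + c) g); [|apply Cinf_continuous; auto].
  apply (continuous_plus (fun w : R * R => lam * snd w) (fun _ => c)); [|apply continuous_const].
  apply (continuous_scal_r lam (fun w : R * R => snd w)), continuous_snd.
Qed.

Lemma smooth2_wave k1 k2 f g : Cinf f -> Cinf g -> smooth2 (wave k1 k2 f g).
Proof.
intros Hf Hg l. destruct (Dlist_wave l k1 k2 f g Hf Hg) as [k1' [k2' [f' [g' [Hf' [Hg' ->]]]]]].
split.
- intros t x; split; eexists; [apply is_derive_wave_t|apply is_derive_wave_x]; auto.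
- intro z; apply continuous_wave; auto.
Qed.

End Waves.

Section NullSurface.
Variables (A1 A2 B1 B2 : R -> R) (lam c : R).
Hypotheses (HA1 : Cinf A1) (HA2 : Cinf A2) (HB1 : Cinf B1) (HB2 : Cinf B2) (Hlam : 0 < lam)
  (HA : forall u, Derive A1 u * Derive A1 u + Derive A2 u * Derive A2 u = 1)
  (HB : forall v, Derive B1 v * Derive B1 v + Derive B2 v * Derive B2 v = 1).

Definition null_surface (t x : R) : vec2 := (wave lam c 1 1 A1 B1 t x, wave lam c 1 1 A2 B2 t x).

Definition tangent_sum_sq (t x : R) : R :=
  let u := t + lam * x + c in let v := lam * x + c in
  (Derive A1 u + Derive B1 v) * (Derive A1 u + Derive B1 v) +
  (Derive A2 u + Derive B2 v) * (Derive A2 u + Derive B2 v).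

Lemma smooth_map2_null_surface : smooth_map2 null_surface.
Proof. split; apply smooth2_wave; auto. Qed.

Lemma null_surface_frame t x :
  let u := t + lam * x + c in let v := lam * x + c in
  Xt null_surface t x = mkV3 1 (Derive A1 u) (Derive A2 u) /\
  Xx null_surface t x = mkV3 0 (lam * (Derive A1 u + Derive B1 v)) (lam * (Derive A2 u + Derive B2 v)) /\
  Xtt null_surface t x = mkV3 0 (Derive (Derive A1) u) (Derive (Derive A2) u) /\
  Xtx null_surface t x = mkV3 0 (lam * Derive (Derive A1) u) (lam * Derive (Derive A2) u) /\
  Xxx null_surface t x = mkV3 0 (lam * lam * (Derive (Derive A1) u + Derive (Derive B1) v))
                                (lam * lam * (Derive (Derive A2) u + Derive (Derive B2) v)).
Proof.
cbv zeta.
assert (E1 : g1 null_surface = wave lam c 1 1 A1 B1) by reflexivity.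
assert (E2 : g2 null_surface = wave lam c 1 1 A2 B2) by reflexivity.
assert (CA1 := Cinf_Derive _ HA1). assert (CA2 := Cinf_Derive _ HA2).
assert (CB1 := Cinf_Derive _ HB1). assert (CB2 := Cinf_Derive _ HB2).
unfold Xt, Xx, Xtt, Xtx, Xxx; rewrite E1, E2.
rewrite !dT_wave, !dX_wave by auto.
unfold wave; repeat split; f_equal; ring.
Qed.

Lemma gtt_null_surface t x : gtt null_surface t x = 0.
Proof.
unfold gtt; destruct (null_surface_frame t x) as [-> _]; unfold mink; cbn.
generalize (HA (t + lam * x + c)); nra.
Qed.

Lemma gtx_null_surface t x : gtx null_surface t x = lam / 2 * tangent_sum_sq t x.
Proof.
unfold gtx, tangent_sum_sq; destruct (null_surface_frame t x) as [-> [-> _]]; unfold mink; cbn.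
assert (U := HA (t + lam * x + c)). assert (V := HB (lam * x + c)).
field_simplify. nra.
Qed.

Lemma gxx_null_surface t x : gxx null_surface t x = lam * lam * tangent_sum_sq t x.
Proof.
unfold gxx, tangent_sum_sq; destruct (null_surface_frame t x) as [_ [-> _]]; unfold mink; cbn.
ring.
Qed.

Hypothesis Htrans : forall t x, 0 < tangent_sum_sq t x.

Lemma timelike_null_surface t x : timelike_at null_surface t x.
Proof.
unfold timelike_at, gdet. rewrite gtt_null_surface, gtx_null_surface.
assert (0 < lam / 2 * tangent_sum_sq t x) by (apply Rmult_lt_0_compat; [lra|auto]).
nra.
Qed.

Lemma regular_null_surface t x : regular_at null_surface t x.
Proof.
intros c1 c2 E. destruct (null_surface_frame t x) as [E1 [E2 _]]. rewrite E1, E2 in E.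
unfold v3add, v3scal, v3zero in E; cbn in E. injection E; intros H3 H2 H1.
assert (Hc1 : c1 = 0) by lra. subst c1. split; [auto|].
assert (S := Htrans t x). unfold tangent_sum_sq in S; cbv zeta in S.
set (P := Derive A1 (t + lam * x + c) + Derive B1 (lam * x + c)) in *.
set (Q := Derive A2 (t + lam * x + c) + Derive B2 (lam * x + c)) in *.
assert (HP : c2 * lam * P = 0) by lra. assert (HQ : c2 * lam * Q = 0) by lra.
assert (H0 : c2 * lam * (P * P + Q * Q) = 0)
  by (replace (c2 * lam * (P * P + Q * Q)) with ((c2 * lam * P) * P + (c2 * lam * Q) * Q) by ring;
      rewrite HP, HQ; ring).
destruct (Rmult_integral _ _ H0) as [H|H]; [|lra].
destruct (Rmult_integral _ _ H) as [H'|H']; lra.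
Qed.

Lemma maximal_null_surface t x : maximal_at null_surface t x.
Proof.
unfold maximal_at, meanCurv.
assert (Z : v3add (v3scal (itt null_surface t x) (Xtt null_surface t x))
  (v3add (v3scal (2 * itx null_surface t x) (Xtx null_surface t x))
         (v3scal (ixx null_surface t x) (Xxx null_surface t x))) = v3zero).
{ destruct (null_surface_frame t x) as [_ [_ [-> [-> ->]]]].
  unfold itt, itx, ixx. rewrite gxx_null_surface, gtx_null_surface, gtt_null_surface.
  assert (Hdet := timelike_null_surface t x); unfold timelike_at in Hdet.
  unfold v3add, v3scal, v3zero; cbn [v0 v1 v2]. f_equal; field; lra. }
rewrite Z. unfold nproj, mink, v3add, v3scal, v3zero; cbn [v0 v1 v2]. f_equal; ring.
Qed.

Lemma null_boundary_const x0 T : null_boundary null_surface (fun _ => x0) T.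
Proof. intros t _; exact (gtt_null_surface t x0). Qed.

Lemma null_boundary_characteristic x0 T : null_boundary null_surface (fun t => x0 - t / lam) T.
Proof.
intros t _; cbn.
assert (Dw : forall (A B : R -> R), Cinf B ->
  Derive (fun s => wave lam c 1 1 A B s (x0 - s / lam)) t = - Derive B (lam * x0 + c - t)).
{ intros A B HBc. apply is_derive_unique.
  assert (Hext : forall s : R,
    A (lam * x0 + c) + B (- s + (lam * x0 + c)) = wave lam c 1 1 A B s (x0 - s / lam)).
  { intro s. unfold wave.
    replace (s + lam * (x0 - s / lam) + c) with (lam * x0 + c) by (field; lra).
    replace (lam * (x0 - s / lam) + c) with (- s + (lam * x0 + c)) by (field; lra). ring. }
  apply (is_derive_ext _ _ t _ Hext).
  apply (is_derive_eq _ _ _ _ (is_derive_plus_R _ _ _ _ _ (is_derive_const_R _ t)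
    (is_derive_comp_R B (fun s => - s + (lam * x0 + c)) t _ _ (Cinf_is_derive B HBc _)
      (is_derive_plus_R _ _ _ _ _ (is_derive_opp_R _ _ _ (is_derive_id t)) (is_derive_const_R _ t))))).
  replace (- t + (lam * x0 + c)) with (lam * x0 + c - t) by ring. ring. }
unfold g1, g2, null_surface; cbn. rewrite !Dw by auto.
unfold mink; cbn. generalize (HB (lam * x0 + c - t)); nra.
Qed.

Lemma null_surface_initial x :
  null_surface 0 x = (A1 (lam * x + c) + B1 (lam * x + c), A2 (lam * x + c) + B2 (lam * x + c)).
Proof. unfold null_surface, wave. rewrite Rplus_0_l. f_equal; ring. Qed.

Lemma null_surface_initial_tangent x (v := lam * x + c) :
  mkV3 1 ((Derive A1 v - Derive B1 v) / 2) ((Derive A2 v - Derive B2 v) / 2) =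
  v3add (v3scal 1 (Xt null_surface 0 x)) (v3scal (- / (2 * lam)) (Xx null_surface 0 x)).
Proof.
destruct (null_surface_frame 0 x) as [-> [-> _]]. rewrite Rplus_0_l.
unfold v3add, v3scal; cbn. f_equal; [ring| |]; subst v; field; lra.
Qed.

End NullSurface.

(** * Plane vectors and integral estimates *)

Lemma continuous_eps_delta (f : R -> R) x eps : continuous f x -> 0 < eps ->
  exists d, 0 < d /\ forall u, Rabs (u - x) < d -> Rabs (f u - f x) < eps.
Proof.
intros Hf He.
destruct (Hf _ (locally_ball (f x) (mkposreal _ He))) as [d Hd].
exists d; split; [apply cond_pos|]. intros u Hu. exact (Hd u Hu).
Qed.

Lemma pos_near_interval (f : R -> R) p q : p <= q -> (forall x, continuous f x) ->
  (forall s, p <= s <= q -> 0 < f s) ->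
  exists d, 0 < d /\ forall u, p - d <= u <= q + d -> 0 < f u.
Proof.
intros Hpq Hf Hpos.
assert (Fp := Hpos p ltac:(lra)). assert (Fq := Hpos q ltac:(lra)).
destruct (continuous_eps_delta f p (f p / 2) (Hf p) ltac:(lra)) as [dp [Hdp Kp]].
destruct (continuous_eps_delta f q (f q / 2) (Hf q) ltac:(lra)) as [dq [Hdq Kq]].
assert (Rmin dp dq <= dp) by apply Rmin_l. assert (Rmin dp dq <= dq) by apply Rmin_r.
assert (0 < Rmin dp dq) by (apply Rmin_glb_lt; auto).
exists (Rmin dp dq / 2); split; [lra|].
intros u Hu.
destruct (Rlt_dec u p) as [Hup|Hup].
- assert (Hu' := Kp u ltac:(rewrite Rabs_left by lra; lra)). apply Rabs_lt_between in Hu'; lra.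
- destruct (Rlt_dec q u) as [Huq|Huq]; [|apply Hpos; lra].
  assert (Hu' := Kq u ltac:(rewrite Rabs_right by lra; lra)). apply Rabs_lt_between in Hu'; lra.
Qed.

Lemma norm2_norm (x y : R) : norm2 (x, y) = norm ((x, y) : R * R).
Proof.
unfold norm2, dot2; cbn [fst snd]. unfold norm; cbn. unfold prod_norm, norm; cbn. unfold abs; cbn.
f_equal. rewrite !Rmult_1_r, <- !Rabs_mult, (Rabs_right (x * x)), (Rabs_right (y * y)) by nra. ring.
Qed.

Lemma norm2_nonneg (u : vec2) : 0 <= norm2 u.
Proof. apply sqrt_pos. Qed.

Lemma norm2_triangle x1 y1 x2 y2 : norm2 (x1 + x2, y1 + y2) <= norm2 (x1, y1) + norm2 (x2, y2).
Proof.
rewrite !norm2_norm.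
apply (norm_triangle (V := prod_NormedModule R_AbsRing R_NormedModule R_NormedModule) (x1, y1) (x2, y2)).
Qed.

Lemma norm2_opp x y : norm2 (- x, - y) = norm2 (x, y).
Proof. unfold norm2, dot2; cbn [fst snd]; f_equal; ring. Qed.

Lemma norm2_le_abs x y : norm2 (x, y) <= Rabs x + Rabs y.
Proof.
unfold norm2, dot2; cbn [fst snd].
rewrite <- (sqrt_Rsqr (Rabs x + Rabs y)) by (generalize (Rabs_pos x) (Rabs_pos y); lra).
apply sqrt_le_1_alt. unfold Rsqr.
replace (x * x) with (Rabs x * Rabs x) by (rewrite <- Rabs_mult; apply Rabs_right; nra).
replace (y * y) with (Rabs y * Rabs y) by (rewrite <- Rabs_mult; apply Rabs_right; nra).
generalize (Rabs_pos x) (Rabs_pos y); nra.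
Qed.

Lemma norm2_div x y N : 0 < N -> norm2 (x / N, y / N) * N = norm2 (x, y).
Proof.
intro HN. unfold norm2, dot2; cbn [fst snd].
replace (x / N * (x / N) + y / N * (y / N)) with ((x * x + y * y) * (/ N * / N)) by (field; lra).
rewrite sqrt_mult_alt, sqrt_square by (try nra; left; apply Rinv_0_lt_compat; auto).
field; lra.
Qed.

Lemma continuous_norm2_Derive f1 f2 t : Cinf f1 -> Cinf f2 ->
  continuous (fun t => norm2 (Derive f1 t, Derive f2 t)) t.
Proof.
intros H1 H2. unfold norm2, dot2; cbn [fst snd].
apply (continuous_comp (fun t => Derive f1 t * Derive f1 t + Derive f2 t * Derive f2 t) sqrt).
- apply (continuous_plus (fun t => Derive f1 t * Derive f1 t));
    apply (continuous_mult (Derive _) (Derive _)); apply Cinf_continuous, Cinf_Derive; auto.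
- apply continuity_pt_filterlim, continuity_pt_sqrt. nra.
Qed.

Lemma ex_RInt_norm2_Derive f1 f2 a b : Cinf f1 -> Cinf f2 ->
  ex_RInt (fun t => norm2 (Derive f1 t, Derive f2 t)) a b.
Proof.
intros H1 H2; apply (ex_RInt_continuous (V := R_CompleteNormedModule)).
intros; apply continuous_norm2_Derive; auto.
Qed.

Lemma norm2_increment_le f1 f2 x y : Cinf f1 -> Cinf f2 -> x <= y ->
  norm2 (f1 y - f1 x, f2 y - f2 x) <= RInt (fun t => norm2 (Derive f1 t, Derive f2 t)) x y.
Proof.
intros H1 H2 Hxy.
assert (I1 : is_RInt (Derive f1) x y (f1 y - f1 x)).
{ apply (is_RInt_derive (V := R_CompleteNormedModule) f1 (Derive f1)); intros;
    [apply Cinf_is_derive|apply Cinf_continuous, Cinf_Derive]; auto. }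
assert (I2 : is_RInt (Derive f2) x y (f2 y - f2 x)).
{ apply (is_RInt_derive (V := R_CompleteNormedModule) f2 (Derive f2)); intros;
    [apply Cinf_is_derive|apply Cinf_continuous, Cinf_Derive]; auto. }
rewrite norm2_norm.
apply (norm_RInt_le (fun t => (Derive f1 t, Derive f2 t)) (fun t => norm2 (Derive f1 t, Derive f2 t)) x y _ _ Hxy).
- intros t _. rewrite norm2_norm; lra.
- exact (is_RInt_fct_extend_pair (fun t => (Derive f1 t, Derive f2 t)) x y _ _ I1 I2).
- apply (RInt_correct (V := R_CompleteNormedModule)), ex_RInt_norm2_Derive; auto.
Qed.

Lemma variation_le f1 f2 a b x y : Cinf f1 -> Cinf f2 -> a <= x <= b -> a <= y <= b ->
  norm2 (f1 y - f1 x, f2 y - f2 x) <= RInt (fun t => norm2 (Derive f1 t, Derive f2 t)) a b.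
Proof.
intros H1 H2.
set (v := fun t => norm2 (Derive f1 t, Derive f2 t)).
assert (Iv : forall u w, ex_RInt v u w) by (intros; apply ex_RInt_norm2_Derive; auto).
assert (Main : forall x y, a <= x -> x <= y -> y <= b -> norm2 (f1 y - f1 x, f2 y - f2 x) <= RInt v a b).
{ clear x y; intros x y Hax Hxy Hyb.
  assert (B := norm2_increment_le f1 f2 x y H1 H2 Hxy). fold v in B.
  assert (E1 : RInt v a x + RInt v x b = RInt v a b) by (apply (RInt_Chasles (V := R_CompleteNormedModule)); auto).
  assert (E2 : RInt v x y + RInt v y b = RInt v x b) by (apply (RInt_Chasles (V := R_CompleteNormedModule)); auto).
  assert (0 <= RInt v a x) by (apply RInt_ge_0; auto; intros; apply norm2_nonneg).
  assert (0 <= RInt v y b) by (apply RInt_ge_0; auto; intros; apply norm2_nonneg).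
  lra. }
intros Hx Hy. destruct (Rle_dec x y); [apply Main; lra|].
rewrite <- norm2_opp. replace (- (f1 y - f1 x)) with (f1 x - f1 y) by ring.
replace (- (f2 y - f2 x)) with (f2 x - f2 y) by ring. apply Main; lra.
Qed.

Lemma RInt_pos (f : R -> R) a b : a < b -> (forall x, continuous f x) -> (forall x, 0 < f x) ->
  0 < RInt f a b.
Proof.
intros Hab Hc Hp.
assert (E : RInt (fun _ => 0) a b = 0).
{ rewrite (RInt_const (V := R_CompleteNormedModule)). unfold scal; cbn; unfold mult; cbn; ring. }
rewrite <- E. apply RInt_lt; auto. intros; apply continuous_const.
Qed.

(* The ratio [int N / int (N / k)] is a weighted harmonic mean of [k], hence below its maximum. *)
Lemma harmonic_mean_le_max (N k : R -> R) p q : p < q ->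
  (forall x, continuous N x) -> (forall x, continuous k x) -> (forall x, 0 < N x) -> (forall x, 0 < k x) ->
  exists s, p <= s <= q /\ RInt N p q / RInt (fun s => N s / k s) p q <= k s.
Proof.
intros Hpq CN Ck PN Pk.
assert (CNk : forall x, continuous (fun s => N s / k s) x).
{ intro x. apply (continuous_mult N (fun s => / k s)); auto.
  apply (continuous_comp k Rinv); auto. apply continuity_pt_filterlim, continuity_pt_inv; [apply continuity_pt_id|].
  generalize (Pk x); lra. }
assert (HL : 0 < RInt N p q) by (apply RInt_pos; auto).
assert (HI : 0 < RInt (fun s => N s / k s) p q)
  by (apply RInt_pos; auto; intro; apply Rdiv_lt_0_compat; auto).
set (j := RInt N p q / RInt (fun s => N s / k s) p q).
assert (Hj : 0 < j) by (apply Rdiv_lt_0_compat; auto).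
apply NNPP; intro Hn.
assert (Lt : RInt (fun s => / j * N s) p q < RInt (fun s => N s / k s) p q).
{ apply RInt_lt; auto; [intros x _; apply (continuous_scal_r (/ j) N); auto|].
  intros x Hx. assert (Hkx : k x < j) by (apply Rnot_le_lt; intro H; apply Hn; exists x; split; [lra|auto]).
  generalize (PN x) (Pk x); intros. unfold Rdiv. rewrite Rmult_comm.
  apply Rmult_lt_compat_l; auto. apply Rinv_lt_contravar; auto. nra. }
assert (E : RInt (fun s => / j * N s) p q = / j * RInt N p q).
{ apply (RInt_scal (V := R_CompleteNormedModule) N p q (/ j)).
  apply (ex_RInt_continuous (V := R_CompleteNormedModule)); auto. }
assert (E' : / j * RInt N p q = RInt (fun s => N s / k s) p q) by (unfold j; field; lra).
lra.
Qed.

(** * The null frame of the data *)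

Lemma norm2_sqr (u : vec2) : norm2 u ^ 2 = dot2 u u.
Proof. unfold norm2, dot2; rewrite pow2_sqrt; auto; nra. Qed.

Lemma lt_0_of_sqrt_pos x : 0 < sqrt x -> 0 < x.
Proof. intro H; destruct (Rle_dec x 0) as [Hle|]; [rewrite sqrt_neg_0 in H; lra|lra]. Qed.

Section NullFrame.
Variables al be : R -> vec2.

Definition speed (u : R) : R := norm2 (dcurve al u).

(* Off the interval of the data [be] need not be normal to [al]; only its normal part is used, which
   keeps the two null directions unit vectors wherever [al] is regular and [|be| < 1]. *)
Definition normal_part (u : R) : vec2 :=
  let h := dot2 (be u) (unitT al u) in
  (fst (be u) - h * fst (unitT al u), snd (be u) - h * snd (unitT al u)).

Definition lorentz_factor (u : R) : R := sqrt (1 - dot2 (normal_part u) (normal_part u)).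

Definition null_a (u : R) : vec2 :=
  (fst (normal_part u) + lorentz_factor u * fst (unitT al u),
   snd (normal_part u) + lorentz_factor u * snd (unitT al u)).

Definition null_b (u : R) : vec2 :=
  (- fst (normal_part u) + lorentz_factor u * fst (unitT al u),
   - snd (normal_part u) + lorentz_factor u * snd (unitT al u)).

Definition admissible (u : R) : Prop := 0 < speed u /\ norm2 (be u) < 1.

Section Pointwise.
Variable u : R.
Hypothesis Hu : admissible u.

Lemma unitT_unit : dot2 (unitT al u) (unitT al u) = 1.
Proof.
destruct Hu as [Hs _]. unfold speed, norm2, dot2 in Hs. unfold unitT, norm2, dot2; cbn [fst snd].
generalize (fst (dcurve al u)) (snd (dcurve al u)) Hs; intros x y H.
assert (HS := lt_0_of_sqrt_pos _ H).
assert (E := sqrt_sqrt (x * x + y * y) ltac:(lra)).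
replace (x / sqrt (x * x + y * y) * (x / sqrt (x * x + y * y)) + y / sqrt (x * x + y * y) * (y / sqrt (x * x + y * y)))
  with ((x * x + y * y) / (sqrt (x * x + y * y) * sqrt (x * x + y * y))) by (field; lra).
rewrite E; field; lra.
Qed.

Lemma normal_part_orthogonal : dot2 (normal_part u) (unitT al u) = 0.
Proof.
assert (E := unitT_unit). unfold normal_part, dot2 in *; cbn [fst snd].
set (T := unitT al u) in *.
replace ((fst (be u) - (fst (be u) * fst T + snd (be u) * snd T) * fst T) * fst T +
  (snd (be u) - (fst (be u) * fst T + snd (be u) * snd T) * snd T) * snd T)
  with ((fst (be u) * fst T + snd (be u) * snd T) * (1 - (fst T * fst T + snd T * snd T))) by ring.
rewrite E; ring.
Qed.

Lemma normal_part_small : dot2 (normal_part u) (normal_part u) < 1.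
Proof.
assert (E := unitT_unit). destruct Hu as [_ Hb].
assert (Hb2 : dot2 (be u) (be u) < 1)
  by (rewrite <- norm2_sqr; generalize (sqrt_pos (dot2 (be u) (be u))); unfold norm2 in *; nra).
unfold normal_part, dot2 in *; cbn [fst snd].
set (T := unitT al u) in *. set (h := fst (be u) * fst T + snd (be u) * snd T).
replace ((fst (be u) - h * fst T) * (fst (be u) - h * fst T) + (snd (be u) - h * snd T) * (snd (be u) - h * snd T))
  with (fst (be u) * fst (be u) + snd (be u) * snd (be u) - h * h * (2 - (fst T * fst T + snd T * snd T)))
  by (unfold h; ring).
rewrite E. nra.
Qed.

Lemma lorentz_factor_pos : 0 < lorentz_factor u.
Proof. apply sqrt_lt_R0; generalize normal_part_small; lra. Qed.

Lemma lorentz_factor_sqr : lorentz_factor u * lorentz_factor u = 1 - dot2 (normal_part u) (normal_part u).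
Proof. apply sqrt_sqrt; generalize normal_part_small; lra. Qed.

Lemma null_a_unit : dot2 (null_a u) (null_a u) = 1.
Proof.
generalize unitT_unit normal_part_orthogonal lorentz_factor_sqr.
unfold null_a, dot2; cbn [fst snd].
set (k := lorentz_factor u). set (n := normal_part u). set (T := unitT al u). intros E O K.
replace ((fst n + k * fst T) * (fst n + k * fst T) + (snd n + k * snd T) * (snd n + k * snd T))
  with ((fst n * fst n + snd n * snd n) + 2 * k * (fst n * fst T + snd n * snd T) +
        k * k * (fst T * fst T + snd T * snd T)) by ring.
rewrite E, O, K; ring.
Qed.

Lemma null_b_unit : dot2 (null_b u) (null_b u) = 1.
Proof.
generalize unitT_unit normal_part_orthogonal lorentz_factor_sqr.
unfold null_b, dot2; cbn [fst snd].
set (k := lorentz_factor u). set (n := normal_part u). set (T := unitT al u). intros E O K.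
replace ((- fst n + k * fst T) * (- fst n + k * fst T) + (- snd n + k * snd T) * (- snd n + k * snd T))
  with ((fst n * fst n + snd n * snd n) - 2 * k * (fst n * fst T + snd n * snd T) +
        k * k * (fst T * fst T + snd T * snd T)) by ring.
rewrite E, O, K; ring.
Qed.

Lemma norm2_null_a_plus_null_b :
  norm2 (fst (null_a u) + fst (null_b u), snd (null_a u) + snd (null_b u)) = 2 * lorentz_factor u.
Proof.
generalize unitT_unit lorentz_factor_pos. unfold norm2, null_a, null_b, dot2; cbn [fst snd].
set (k := lorentz_factor u). set (T := unitT al u). intros E K.
replace ((fst (normal_part u) + k * fst T + (- fst (normal_part u) + k * fst T)) *
  (fst (normal_part u) + k * fst T + (- fst (normal_part u) + k * fst T)) +
  (snd (normal_part u) + k * snd T + (- snd (normal_part u) + k * snd T)) *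
  (snd (normal_part u) + k * snd T + (- snd (normal_part u) + k * snd T)))
  with ((2 * k) * (2 * k) * (fst T * fst T + snd T * snd T)) by ring.
rewrite E, Rmult_1_r. apply sqrt_square; lra.
Qed.

End Pointwise.
End NullFrame.

Section Smoothness.
Variables (al be : R -> vec2) (C : R -> R).
Hypotheses (Hal : smooth_curve al) (Hbe : smooth_curve be) (HC : Cinf C)
  (HadmC : forall y, admissible al be (C y)).

Let Cinf_at (f : R -> R) := Cinf (fun y => f (C y)).

Lemma Cinf_speed_comp : Cinf_at (speed al).
Proof.
assert (D1 : Cinf_at (Derive (fun r => fst (al r))))
  by (apply Cinf_comp; auto; apply Cinf_Derive, Cinf_smooth1, Hal).
assert (D2 : Cinf_at (Derive (fun r => snd (al r))))
  by (apply Cinf_comp; auto; apply Cinf_Derive, Cinf_smooth1, Hal).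
apply Cinf_sqrt; [apply Cinf_plus; apply Cinf_mult; auto|].
intro y; destruct (HadmC y) as [Hs _]. apply lt_0_of_sqrt_pos, Hs.
Qed.

Lemma Cinf_null_frame_comp :
  Cinf_at (fun u => fst (null_a al be u)) /\ Cinf_at (fun u => snd (null_a al be u)) /\
  Cinf_at (fun u => fst (null_b al be u)) /\ Cinf_at (fun u => snd (null_b al be u)) /\
  Cinf_at (lorentz_factor al be).
Proof.
assert (S := Cinf_speed_comp).
assert (Hspeed : forall y, speed al (C y) <> 0) by (intro y; destruct (HadmC y); lra).
assert (B1 : Cinf_at (fun r => fst (be r))) by (apply Cinf_comp; auto; apply Cinf_smooth1, Hbe).
assert (B2 : Cinf_at (fun r => snd (be r))) by (apply Cinf_comp; auto; apply Cinf_smooth1, Hbe).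
assert (T1 : Cinf_at (fun u => fst (unitT al u))).
{ apply (Cinf_div (fun y => Derive (fun r => fst (al r)) (C y)) (fun y => speed al (C y))); auto.
  apply Cinf_comp; auto; apply Cinf_Derive, Cinf_smooth1, Hal. }
assert (T2 : Cinf_at (fun u => snd (unitT al u))).
{ apply (Cinf_div (fun y => Derive (fun r => snd (al r)) (C y)) (fun y => speed al (C y))); auto.
  apply Cinf_comp; auto; apply Cinf_Derive, Cinf_smooth1, Hal. }
assert (H : Cinf_at (fun u => dot2 (be u) (unitT al u))) by (apply Cinf_plus; apply Cinf_mult; auto).
assert (N1 : Cinf_at (fun u => fst (normal_part al be u))) by (apply Cinf_minus; [|apply Cinf_mult]; auto).
assert (N2 : Cinf_at (fun u => snd (normal_part al be u))) by (apply Cinf_minus; [|apply Cinf_mult]; auto).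
assert (K : Cinf_at (lorentz_factor al be)).
{ apply (Cinf_sqrt (fun y => 1 - dot2 (normal_part al be (C y)) (normal_part al be (C y)))).
  - apply Cinf_minus; [apply Cinf_const|]. apply Cinf_plus; apply Cinf_mult; auto.
  - intro y; generalize (normal_part_small al be (C y) (HadmC y)); lra. }
repeat split; auto; apply Cinf_plus; try apply Cinf_opp; try apply Cinf_mult; auto.
Qed.

End Smoothness.

Section OnTheData.
Variables (al be : R -> vec2) (s : R).
Hypotheses (Hadm : admissible al be s) (Horth : dot2 (be s) (dcurve al s) = 0).

Lemma normal_part_data : normal_part al be s = be s.
Proof.
assert (Hh : dot2 (be s) (unitT al s) = 0).
{ destruct Hadm as [Hsp _]. unfold speed in Hsp. unfold dot2, unitT in *; cbn [fst snd].
  replace (fst (be s) * (fst (dcurve al s) / norm2 (dcurve al s)) + snd (be s) * (snd (dcurve al s) / norm2 (dcurve al s)))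
    with ((fst (be s) * fst (dcurve al s) + snd (be s) * snd (dcurve al s)) / norm2 (dcurve al s)) by (field; lra).
  rewrite Horth; unfold Rdiv; ring. }
unfold normal_part; rewrite Hh. destruct (be s); cbn [fst snd]; f_equal; ring.
Qed.

Lemma lorentz_factor_data : lorentz_factor al be s = sqrt (1 - norm2 (be s) ^ 2).
Proof. unfold lorentz_factor; rewrite normal_part_data, norm2_sqr; reflexivity. Qed.

Lemma null_a_data : null_a al be s = avec al be s.
Proof. unfold null_a, avec; rewrite normal_part_data, lorentz_factor_data; reflexivity. Qed.

Lemma null_b_data : null_b al be s = bvec al be s.
Proof. unfold null_b, bvec; rewrite normal_part_data, lorentz_factor_data; reflexivity. Qed.

End OnTheData.

Section Decomposition.
Variables (al be : R -> vec2) (u : R).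
Hypothesis Hu : admissible al be u.

Let F := speed al u / (2 * lorentz_factor al be u).

Lemma null_sum_fst : (fst (null_a al be u) + fst (null_b al be u)) * F = Derive (fun r => fst (al r)) u.
Proof.
assert (K := lorentz_factor_pos al be u Hu). destruct Hu as [Hs _].
unfold F, null_a, null_b, unitT, speed, dcurve in *; cbv zeta; cbn [fst snd] in *. field; lra.
Qed.

Lemma null_sum_snd : (snd (null_a al be u) + snd (null_b al be u)) * F = Derive (fun r => snd (al r)) u.
Proof.
assert (K := lorentz_factor_pos al be u Hu). destruct Hu as [Hs _].
unfold F, null_a, null_b, unitT, speed, dcurve in *; cbv zeta; cbn [fst snd] in *. field; lra.
Qed.

End Decomposition.

Lemma null_diff_fst al be u : fst (null_a al be u) - fst (null_b al be u) = 2 * fst (normal_part al be u).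
Proof. unfold null_a, null_b; cbn [fst snd]; ring. Qed.

Lemma null_diff_snd al be u : snd (null_a al be u) - snd (null_b al be u) = 2 * snd (normal_part al be u).
Proof. unfold null_a, null_b; cbn [fst snd]; ring. Qed.

(** * The surface of a global null frame *)

Definition maximal_development (al be : R -> vec2) (p q T : R) : Prop :=
  exists (P Q : R -> R) (ga : R -> R -> vec2),
    smooth1 P /\ smooth1 Q /\ smooth_map2 ga /\
    P 0 = p /\ Q 0 = q /\ P T = Q T /\
    (forall t, 0 <= t <= T -> P t <= Q t) /\
    (forall t x, Omega P Q T t x ->
       regular_at ga t x /\ timelike_at ga t x /\ maximal_at ga t x) /\
    (forall s, p <= s <= q ->
       exists x, Omega P Q T 0 x /\ ga 0 x = al s /\
         exists c1 c2 : R,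
           mkV3 1 (fst (be s)) (snd (be s)) =
           v3add (v3scal c1 (Xt ga 0 x)) (v3scal c2 (Xx ga 0 x))) /\
    null_boundary ga P T /\ null_boundary ga Q T.

Section Development.
Variables (p q : R) (al be : R -> vec2) (a1 a2 b1 b2 F : R -> R).
Hypotheses (Hpq : p < q) (Hal : smooth_curve al)
  (Ha1 : Cinf a1) (Ha2 : Cinf a2) (Hb1 : Cinf b1) (Hb2 : Cinf b2) (HF : Cinf F)
  (Hua : forall y, a1 y * a1 y + a2 y * a2 y = 1)
  (Hub : forall y, b1 y * b1 y + b2 y * b2 y = 1)
  (Htrans : forall y1 y2, 0 < (a1 y1 + b1 y2) * (a1 y1 + b1 y2) + (a2 y1 + b2 y2) * (a2 y1 + b2 y2))
  (HFpos : forall y, 0 < F y)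
  (HFtail : exists lo hi m, 0 < m /\ forall y, y <= lo \/ hi <= y -> m <= F y)
  (Hsum1 : forall s, p <= s <= q -> (a1 s + b1 s) * F s = Derive (fun r => fst (al r)) s)
  (Hsum2 : forall s, p <= s <= q -> (a2 s + b2 s) * F s = Derive (fun r => snd (al r)) s)
  (Hdiff1 : forall s, p <= s <= q -> a1 s - b1 s = 2 * fst (be s))
  (Hdiff2 : forall s, p <= s <= q -> a2 s - b2 s = 2 * snd (be s)).

Let g := sigma_inv F HF HFtail.
Let sg := sigma F.
Let curve (a : R -> R) (x0 : R) := primitive_along F HF HFtail a (sg p) x0.
Let A1 := curve a1 0.
Let A2 := curve a2 0.
Let B1 := curve b1 (fst (al p)).
Let B2 := curve b2 (snd (al p)).

Let T := 2 * RInt F p q.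
Let lam := T / (q - p).
(* The initial slice [lam x + c, x in [p, q]] has length [T], twice [sg q - sg p]; it is centred on the data. *)
Let c := sg p - T / 4 - lam * p.
Let ga := null_surface A1 A2 B1 B2 lam c.

Lemma sigma_span : sg q - sg p = T / 2.
Proof.
unfold sg, sigma, T. rewrite <- (RInt_Chasles (V := R_CompleteNormedModule) F 0 p q) by (apply ex_RInt_Cinf; auto).
cbn; unfold plus; cbn; field.
Qed.

Lemma lifespan_pos : 0 < T.
Proof. generalize sigma_span (sigma_increasing F HF HFpos p q Hpq); fold sg; lra. Qed.

Lemma lam_pos : 0 < lam.
Proof. apply Rdiv_lt_0_compat; [apply lifespan_pos|lra]. Qed.

Lemma Derive_curve a x0 v : Cinf a -> Derive (curve a x0) v = a (g v).
Proof. intro Ha; apply Derive_primitive_along; auto. Qed.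

Lemma Cinf_curve a x0 : Cinf a -> Cinf (curve a x0).
Proof. intro Ha; apply Cinf_primitive_along; auto. Qed.

Lemma A_unit_speed u : Derive A1 u * Derive A1 u + Derive A2 u * Derive A2 u = 1.
Proof. unfold A1, A2; rewrite !Derive_curve by auto; apply Hua. Qed.

Lemma B_unit_speed v : Derive B1 v * Derive B1 v + Derive B2 v * Derive B2 v = 1.
Proof. unfold B1, B2; rewrite !Derive_curve by auto; apply Hub. Qed.

Lemma A_B_transversal t x : 0 < tangent_sum_sq A1 A2 B1 B2 lam c t x.
Proof. unfold tangent_sum_sq, A1, A2, B1, B2; rewrite !Derive_curve by auto; apply Htrans. Qed.

Lemma null_surface_contains_data s : p <= s <= q ->
  exists x, Omega (fun _ => p) (fun t => q - t / lam) T 0 x /\ ga 0 x = al s /\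
    exists c1 c2 : R,
      mkV3 1 (fst (be s)) (snd (be s)) = v3add (v3scal c1 (Xt ga 0 x)) (v3scal c2 (Xx ga 0 x)).
Proof.
intro Hs. assert (L := lam_pos). assert (Sp := sigma_span).
assert (Ss : sg p <= sg s <= sg q) by (split; apply sigma_monotone; auto; lra).
set (x := (sg s - c) / lam).
assert (Ev : lam * x + c = sg s) by (unfold x; field; lra).
assert (Eg : g (sg s) = s) by (apply sigma_inv_sigma; auto).
exists x; split; [|split].
- assert (Tl : T = lam * (q - p)) by (unfold lam; field; lra).
  unfold Omega; split; [lra|]. unfold Rdiv at 1; rewrite Rmult_0_l, Rminus_0_r.
  split; apply (Rmult_le_reg_l lam); auto; unfold c in Ev; lra.
- unfold ga; rewrite null_surface_initial, Ev, (surjective_pairing (al s)).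
  unfold A1, A2, B1, B2, curve.
  assert (C1 : Cinf (fun r => fst (al r))) by apply Cinf_smooth1, Hal.
  assert (C2 : Cinf (fun r => snd (al r))) by apply Cinf_smooth1, Hal.
  assert (E1 := primitives_trace F HF HFpos HFtail a1 b1 (fun r => fst (al r)) p q Ha1 Hb1 C1 Hsum1 (sg s) Ss).
  assert (E2 := primitives_trace F HF HFpos HFtail a2 b2 (fun r => snd (al r)) p q Ha2 Hb2 C2 Hsum2 (sg s) Ss).
  cbv beta in E1, E2. unfold sg in *. rewrite E1, E2. fold g; rewrite Eg; reflexivity.
- exists 1, (- / (2 * lam)). unfold ga.
  rewrite <- null_surface_initial_tangent, Ev by (auto; apply Cinf_curve; auto).
  unfold A1, A2, B1, B2; rewrite !Derive_curve, Eg by auto.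
  f_equal; [rewrite Hdiff1 by auto|rewrite Hdiff2 by auto]; field.
Qed.

Lemma maximal_development_of_null_frame : maximal_development al be p q T.
Proof.
assert (L := lam_pos). assert (TP := lifespan_pos).
assert (HA1 : Cinf A1) by (apply Cinf_curve; auto). assert (HA2 : Cinf A2) by (apply Cinf_curve; auto).
assert (HB1 : Cinf B1) by (apply Cinf_curve; auto). assert (HB2 : Cinf B2) by (apply Cinf_curve; auto).
assert (HPQ : forall t, 0 <= t <= T -> p <= q - t / lam).
{ intros t Ht. assert (t / lam <= T / lam) by (apply Rmult_le_compat_r; [left; apply Rinv_0_lt_compat|]; lra).
  replace (T / lam) with (q - p) in * by (unfold lam; field; lra). lra. }
exists (fun _ => p), (fun t => q - t / lam), ga.
split; [|split; [|split; [|split; [|split; [|split; [|split; [|split; [|split; [|split]]]]]]]]].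
- apply Cinf_smooth1, Cinf_const.
- apply Cinf_smooth1, Cinf_minus; [apply Cinf_const|apply Cinf_div; [apply Cinf_id|apply Cinf_const|intro; lra]].
- apply smooth_map2_null_surface; auto.
- reflexivity.
- unfold Rdiv; ring.
- replace (T / lam) with (q - p) by (unfold lam; field; lra). ring.
- exact HPQ.
- intros t x _; split; [|split].
  + apply regular_null_surface; auto using A_B_transversal.
  + apply timelike_null_surface; auto using A_unit_speed, B_unit_speed, A_B_transversal.
  + apply maximal_null_surface; auto using A_unit_speed, B_unit_speed, A_B_transversal.
- apply null_surface_contains_data.
- apply null_boundary_const; auto using A_unit_speed.
- apply null_boundary_characteristic; auto using B_unit_speed.
Qed.

End Development.

(** * Extending the data past the endpoints *)

Lemma curve_near_interval f1 f2 p q eta : p <= q -> Cinf f1 -> Cinf f2 -> 0 < eta ->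
  exists d, 0 < d /\ forall u, p - d <= u <= q + d ->
    exists s, p <= s <= q /\ norm2 (f1 u - f1 s, f2 u - f2 s) <= eta.
Proof.
intros Hpq H1 H2 He.
assert (Near : forall x, exists d, 0 < d /\ forall u, Rabs (u - x) < d -> norm2 (f1 u - f1 x, f2 u - f2 x) <= eta).
{ intro x.
  destruct (continuous_eps_delta f1 x (eta / 2) (Cinf_continuous f1 H1 x) ltac:(lra)) as [d1 [Hd1 K1]].
  destruct (continuous_eps_delta f2 x (eta / 2) (Cinf_continuous f2 H2 x) ltac:(lra)) as [d2 [Hd2 K2]].
  exists (Rmin d1 d2); split; [apply Rmin_glb_lt; auto|].
  intros u Hu. eapply Rle_trans; [apply norm2_le_abs|].
  generalize (K1 u ltac:(generalize (Rmin_l d1 d2); lra)) (K2 u ltac:(generalize (Rmin_r d1 d2); lra)); lra. }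
destruct (Near p) as [dp [Hdp Kp]]. destruct (Near q) as [dq [Hdq Kq]].
assert (Rmin dp dq <= dp) by apply Rmin_l. assert (Rmin dp dq <= dq) by apply Rmin_r.
assert (0 < Rmin dp dq) by (apply Rmin_glb_lt; auto).
exists (Rmin dp dq / 2); split; [lra|]. intros u Hu.
destruct (Rlt_dec u p).
- exists p; split; [lra|]. apply Kp. rewrite Rabs_left; lra.
- destruct (Rlt_dec q u).
  + exists q; split; [lra|]. apply Kq. rewrite Rabs_right; lra.
  + exists u; split; [lra|]. rewrite !Rminus_diag. unfold norm2, dot2; cbn [fst snd].
    rewrite Rmult_0_l, Rplus_0_l, sqrt_0; lra.
Qed.

Section Extension.
Variables (p q : R) (al be : R -> vec2).
Hypotheses (Hpq : p < q) (Hal : smooth_curve al) (Hbe : smooth_curve be)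
  (Hreg : forall s, p <= s <= q -> 0 < norm2 (dcurve al s))
  (Horth : forall s, p <= s <= q -> dot2 (be s) (dcurve al s) = 0)
  (Hsm : forall s, p <= s <= q -> norm2 (be s) < 1).

Lemma admissible_data s : p <= s <= q -> admissible al be s.
Proof. intro Hs; split; [apply Hreg|apply Hsm]; auto. Qed.

Lemma admissible_near : exists d, 0 < d /\ forall u, p - d <= u <= q + d -> admissible al be u.
Proof.
assert (Ca1 : Cinf (fun r => fst (al r))) by apply Cinf_smooth1, Hal.
assert (Ca2 : Cinf (fun r => snd (al r))) by apply Cinf_smooth1, Hal.
assert (Cb1 : Cinf (fun r => fst (be r))) by apply Cinf_smooth1, Hbe.
assert (Cb2 : Cinf (fun r => snd (be r))) by apply Cinf_smooth1, Hbe.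
set (f := fun u => dot2 (dcurve al u) (dcurve al u)).
set (h := fun u => 1 - dot2 (be u) (be u)).
assert (Cf : Cinf f) by (apply Cinf_plus; apply Cinf_mult; apply Cinf_Derive; auto).
assert (Ch : Cinf h) by (apply Cinf_minus; [apply Cinf_const|apply Cinf_plus; apply Cinf_mult; auto]).
destruct (pos_near_interval f p q ltac:(lra) (Cinf_continuous f Cf)) as [d1 [Hd1 K1]].
{ intros s Hs. apply lt_0_of_sqrt_pos, Hreg, Hs. }
destruct (pos_near_interval h p q ltac:(lra) (Cinf_continuous h Ch)) as [d2 [Hd2 K2]].
{ intros s Hs. unfold h. rewrite <- norm2_sqr. generalize (Hsm s Hs) (norm2_nonneg (be s)); nra. }
exists (Rmin d1 d2); split; [apply Rmin_glb_lt; auto|].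
intros u Hu. generalize (Rmin_l d1 d2) (Rmin_r d1 d2); intros.
split; [apply sqrt_lt_R0, K1; lra|].
unfold norm2; rewrite <- sqrt_1. apply sqrt_lt_1_alt.
generalize (K2 u ltac:(lra)); unfold h, dot2; split; [nra|lra].
Qed.


Section AlongClamp.
Variables (d0 : R) (c0 : R -> R).
Hypotheses (Hadm0 : forall u, p - d0 <= u <= q + d0 -> admissible al be u) (Hc0 : Cinf c0)
  (Hc0id : forall s, p <= s <= q -> c0 s = s) (Hc0r : forall s, p - d0 <= c0 s <= q + d0).

Definition frame_a1 (u : R) : R := fst (null_a al be (c0 u)).
Definition frame_a2 (u : R) : R := snd (null_a al be (c0 u)).
Definition frame_b1 (u : R) : R := fst (null_b al be (c0 u)).
Definition frame_b2 (u : R) : R := snd (null_b al be (c0 u)).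
Definition frame_speed (u : R) : R := speed al (c0 u).
Definition frame_factor (u : R) : R := lorentz_factor al be (c0 u).

Lemma admissible_clamp u : admissible al be (c0 u).
Proof. apply Hadm0, Hc0r. Qed.

Lemma Cinf_frame :
  Cinf frame_a1 /\ Cinf frame_a2 /\ Cinf frame_b1 /\ Cinf frame_b2 /\ Cinf frame_speed /\ Cinf frame_factor.
Proof.
destruct (Cinf_null_frame_comp al be c0 Hal Hbe Hc0 admissible_clamp) as [? [? [? [? ?]]]].
repeat split; auto. apply (Cinf_speed_comp al be c0); auto.
Qed.

Lemma frame_speed_pos u : 0 < frame_speed u.
Proof. apply admissible_clamp. Qed.

Lemma frame_factor_pos u : 0 < frame_factor u.
Proof. apply lorentz_factor_pos, admissible_clamp. Qed.

Definition turning_a : R := RInt (fun t => norm2 (Derive frame_a1 t, Derive frame_a2 t)) p q.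
Definition turning_b : R := RInt (fun t => norm2 (Derive frame_b1 t, Derive frame_b2 t)) p q.

Lemma arcInt_nabla_turning :
  arcInt al p q (fun s => norm2 (nablaU al (avec al be) s) + norm2 (nablaU al (bvec al be) s)) =
  turning_a + turning_b.
Proof.
destruct Cinf_frame as [Ca1 [Ca2 [Cb1 [Cb2 _]]]].
unfold arcInt, turning_a, turning_b.
rewrite <- (RInt_plus (V := R_CompleteNormedModule)) by (apply ex_RInt_norm2_Derive; auto).
apply RInt_ext. rewrite Rmin_left, Rmax_right by lra. intros s Hs.
assert (Loc : locally s (fun r => p <= r <= q)) by (apply locally_interval with p q; cbn; try lra; intros; lra).
assert (Dd : forall (proj : vec2 -> R) (f : R -> R) (w : R -> vec2), (forall r, p <= r <= q -> f r = proj (w r)) ->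
  Derive (fun r => proj (w r)) s = Derive f s).
{ intros proj f w E. apply Derive_ext_loc. generalize Loc; apply filter_imp. intros r Hr; symmetry; auto. }
unfold nablaU, dcurve; cbv zeta; cbn [fst snd].
rewrite (Dd fst frame_a1 (avec al be)), (Dd snd frame_a2 (avec al be)), (Dd fst frame_b1 (bvec al be)), (Dd snd frame_b2 (bvec al be))
  by (intros r Hr; unfold frame_a1, frame_a2, frame_b1, frame_b2;
      rewrite Hc0id, ?null_a_data, ?null_b_data by (try apply admissible_data; try apply Horth; lra); reflexivity).
rewrite Rmult_plus_distr_r, !norm2_div by (apply Hreg; lra). reflexivity.
Qed.

Lemma length_frame : length al p q = RInt frame_speed p q.
Proof.
unfold length, arcInt. apply RInt_ext. rewrite Rmin_left, Rmax_right by lra. intros s Hs.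
unfold frame_speed, speed. rewrite Hc0id by lra. apply Rmult_1_l.
Qed.

Lemma jindex_frame :
  jindex al be p q = RInt frame_speed p q / RInt (fun s => frame_speed s / frame_factor s) p q.
Proof.
unfold jindex. rewrite length_frame. f_equal.
unfold arcInt. apply RInt_ext. rewrite Rmin_left, Rmax_right by lra. intros s Hs.
unfold frame_speed, frame_factor, speed. rewrite Hc0id by lra.
rewrite lorentz_factor_data by (try apply admissible_data; try apply Horth; lra). apply Rmult_comm.
Qed.

Lemma jindex_le_factor : exists s, p <= s <= q /\ jindex al be p q <= frame_factor s.
Proof.
destruct Cinf_frame as [_ [_ [_ [_ [Cs Ck]]]]].
rewrite jindex_frame. apply harmonic_mean_le_max; auto using frame_speed_pos, frame_factor_pos;
  intro; apply Cinf_continuous; auto.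
Qed.

(* Compare with a point [s1] where [k s1 >= j], at which [|a + b| = 2 k]. *)
Lemma frame_sum_lower_bound sA sB : p <= sA <= q -> p <= sB <= q ->
  2 * jindex al be p q - (turning_a + turning_b) <=
  norm2 (frame_a1 sA + frame_b1 sB, frame_a2 sA + frame_b2 sB).
Proof.
intros HA HB. destruct Cinf_frame as [Ca1 [Ca2 [Cb1 [Cb2 _]]]].
destruct jindex_le_factor as [s1 [Hs1 Hk]].
assert (Va := variation_le _ _ p q s1 sA Ca1 Ca2 Hs1 HA). fold turning_a in Va.
assert (Vb := variation_le _ _ p q s1 sB Cb1 Cb2 Hs1 HB). fold turning_b in Vb.
assert (Hsum : norm2 (frame_a1 s1 + frame_b1 s1, frame_a2 s1 + frame_b2 s1) = 2 * frame_factor s1)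
  by (apply norm2_null_a_plus_null_b, admissible_clamp).
assert (T1 := norm2_triangle (frame_a1 sA + frame_b1 sB) (frame_a2 sA + frame_b2 sB)
  (- (frame_a1 sA - frame_a1 s1) + - (frame_b1 sB - frame_b1 s1))
  (- (frame_a2 sA - frame_a2 s1) + - (frame_b2 sB - frame_b2 s1))).
assert (T2 := norm2_triangle (- (frame_a1 sA - frame_a1 s1)) (- (frame_a2 sA - frame_a2 s1))
  (- (frame_b1 sB - frame_b1 s1)) (- (frame_b2 sB - frame_b2 s1))).
rewrite !norm2_opp in T2.
replace (frame_a1 sA + frame_b1 sB + (- (frame_a1 sA - frame_a1 s1) + - (frame_b1 sB - frame_b1 s1)))
  with (frame_a1 s1 + frame_b1 s1) in T1 by ring.
replace (frame_a2 sA + frame_b2 sB + (- (frame_a2 sA - frame_a2 s1) + - (frame_b2 sB - frame_b2 s1)))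
  with (frame_a2 s1 + frame_b2 s1) in T1 by ring.
lra.
Qed.

Lemma turning_nonneg : 0 <= turning_a /\ 0 <= turning_b.
Proof.
destruct Cinf_frame as [Ca1 [Ca2 [Cb1 [Cb2 _]]]].
split; apply RInt_ge_0; try lra; try (intros; apply norm2_nonneg); apply ex_RInt_norm2_Derive; auto.
Qed.

Hypothesis Hj : jindex al be p q >
  3 / 2 * arcInt al p q (fun s => norm2 (nablaU al (avec al be) s) + norm2 (nablaU al (bvec al be) s)).

(* Only [2 j > int (|a'| + |b'|)] is used: it keeps [a(s) + b(s')] away from [0] for all [s, s'] in [p, q]. *)
Lemma transversality_margin_pos : 0 < 2 * jindex al be p q - (turning_a + turning_b).
Proof. generalize Hj turning_nonneg; rewrite arcInt_nabla_turning; lra. Qed.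

Lemma transversal_near : exists d, 0 < d /\ forall u1 u2, p - d <= u1 <= q + d -> p - d <= u2 <= q + d ->
  0 < norm2 (frame_a1 u1 + frame_b1 u2, frame_a2 u1 + frame_b2 u2).
Proof.
destruct Cinf_frame as [Ca1 [Ca2 [Cb1 [Cb2 _]]]].
set (eta := (2 * jindex al be p q - (turning_a + turning_b)) / 4).
assert (He : 0 < eta) by (generalize transversality_margin_pos; unfold eta; lra).
destruct (curve_near_interval _ _ p q eta ltac:(lra) Ca1 Ca2 He) as [da [Hda Ka]].
destruct (curve_near_interval _ _ p q eta ltac:(lra) Cb1 Cb2 He) as [db [Hdb Kb]].
exists (Rmin da db); split; [apply Rmin_glb_lt; auto|].
intros u1 u2 H1 H2. generalize (Rmin_l da db) (Rmin_r da db); intros.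
destruct (Ka u1 ltac:(lra)) as [sA [HA NA]]. destruct (Kb u2 ltac:(lra)) as [sB [HB NB]].
assert (L := frame_sum_lower_bound sA sB HA HB).
assert (T := norm2_triangle (frame_a1 u1 + frame_b1 u2) (frame_a2 u1 + frame_b2 u2)
  (- (frame_a1 u1 - frame_a1 sA) + - (frame_b1 u2 - frame_b1 sB))
  (- (frame_a2 u1 - frame_a2 sA) + - (frame_b2 u2 - frame_b2 sB))).
assert (T' := norm2_triangle (- (frame_a1 u1 - frame_a1 sA)) (- (frame_a2 u1 - frame_a2 sA))
  (- (frame_b1 u2 - frame_b1 sB)) (- (frame_b2 u2 - frame_b2 sB))).
rewrite !norm2_opp in T'.
replace (frame_a1 u1 + frame_b1 u2 + (- (frame_a1 u1 - frame_a1 sA) + - (frame_b1 u2 - frame_b1 sB)))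
  with (frame_a1 sA + frame_b1 sB) in T by ring.
replace (frame_a2 u1 + frame_b2 u2 + (- (frame_a2 u1 - frame_a2 sA) + - (frame_b2 u2 - frame_b2 sB)))
  with (frame_a2 sA + frame_b2 sB) in T by ring.
unfold eta in *. lra.
Qed.

Section SecondClamp.
Variables (d1 lo hi : R) (c1 : R -> R).
Hypotheses (Hc1 : Cinf c1) (Hc1id : forall s, p <= s <= q -> c1 s = s)
  (Hc1r : forall s, p - d1 <= c1 s <= q + d1)
  (Hc1lo : forall s, s <= lo -> c1 s = c1 lo) (Hc1hi : forall s, hi <= s -> c1 s = c1 hi)
  (Htr : forall u1 u2, p - d1 <= u1 <= q + d1 -> p - d1 <= u2 <= q + d1 ->
     0 < norm2 (frame_a1 u1 + frame_b1 u2, frame_a2 u1 + frame_b2 u2)).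

Let density (y : R) : R := frame_speed (c1 y) / (2 * frame_factor (c1 y)).

Lemma density_pos y : 0 < density y.
Proof. apply Rdiv_lt_0_compat; [apply frame_speed_pos|generalize (frame_factor_pos (c1 y)); lra]. Qed.

Lemma density_data s : p <= s <= q -> density s = speed al s / (2 * lorentz_factor al be s).
Proof. intro Hs; unfold density, frame_speed, frame_factor; rewrite Hc1id, Hc0id by auto; reflexivity. Qed.

Lemma lifespan_density : 2 * RInt density p q = length al p q / jindex al be p q.
Proof.
destruct Cinf_frame as [_ [_ [_ [_ [Cs Ck]]]]].
assert (Hk : forall y, frame_factor y <> 0) by (intro y; generalize (frame_factor_pos y); lra).
rewrite jindex_frame, length_frame.
assert (HL : 0 < RInt frame_speed p q)
  by (apply RInt_pos; auto using frame_speed_pos; apply Cinf_continuous; auto).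
assert (HI : 0 < RInt (fun s => frame_speed s / frame_factor s) p q).
{ apply RInt_pos; auto; [intro; apply Cinf_continuous, Cinf_div; auto|].
  intro; apply Rdiv_lt_0_compat; auto using frame_speed_pos, frame_factor_pos. }
assert (Es : RInt (fun s => / 2 * (frame_speed s / frame_factor s)) p q
             = / 2 * RInt (fun s => frame_speed s / frame_factor s) p q).
{ apply (RInt_scal (V := R_CompleteNormedModule) (fun s => frame_speed s / frame_factor s) p q (/ 2)).
  apply ex_RInt_Cinf, Cinf_div; auto. }
assert (Pt : forall s, p < s < q -> / 2 * (frame_speed s / frame_factor s) = density s).
{ intros s Hs. unfold density; rewrite Hc1id by lra. field; auto. }
rewrite <- (RInt_ext _ _ p q) by (rewrite Rmin_left, Rmax_right by lra; exact Pt).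
rewrite Es. field; lra.
Qed.

Lemma maximal_development_of_clamps : maximal_development al be p q (length al p q / jindex al be p q).
Proof.
destruct Cinf_frame as [Ca1 [Ca2 [Cb1 [Cb2 [Cs Ck]]]]].
assert (Data : forall s, p <= s <= q -> c0 (c1 s) = s) by (intros; rewrite Hc1id, Hc0id; auto).
assert (Hadm : forall s, p <= s <= q -> admissible al be s) by (intros; apply admissible_data; auto).
rewrite <- lifespan_density.
apply maximal_development_of_null_frame with (a1 := fun y => frame_a1 (c1 y)) (a2 := fun y => frame_a2 (c1 y))
  (b1 := fun y => frame_b1 (c1 y)) (b2 := fun y => frame_b2 (c1 y)); auto.
- apply Cinf_comp; auto.
- apply Cinf_comp; auto.
- apply Cinf_comp; auto.
- apply Cinf_comp; auto.
- apply Cinf_div; [apply Cinf_comp; auto|apply Cinf_mult; [apply Cinf_const|apply Cinf_comp; auto]|].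
  intro y; generalize (frame_factor_pos (c1 y)); lra.
- intro y; apply null_a_unit, admissible_clamp.
- intro y; apply null_b_unit, admissible_clamp.
- intros y1 y2; apply lt_0_of_sqrt_pos, Htr; auto.
- apply density_pos.
- exists lo, hi, (Rmin (density lo) (density hi)).
  split; [apply Rmin_glb_lt; apply density_pos|].
  intros y [Hy|Hy]; unfold density; [rewrite (Hc1lo y Hy)|rewrite (Hc1hi y Hy)]; fold (density lo) (density hi);
    [apply Rmin_l|apply Rmin_r].
- intros s Hs; unfold frame_a1, frame_b1; rewrite density_data, Data by auto; apply null_sum_fst; auto.
- intros s Hs; unfold frame_a2, frame_b2; rewrite density_data, Data by auto; apply null_sum_snd; auto.
- intros s Hs; unfold frame_a1, frame_b1; rewrite Data, null_diff_fst, normal_part_data by auto; reflexivity.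
- intros s Hs; unfold frame_a2, frame_b2; rewrite Data, null_diff_snd, normal_part_data by auto; reflexivity.
Qed.

End SecondClamp.

End AlongClamp.

End Extension.

Theorem proposition2p12 (p q : R) (al be : R -> vec2) :
  p < q ->
  smooth_curve al ->
  smooth_curve be ->
  (forall s, p <= s <= q -> 0 < norm2 (dcurve al s)) ->
  (forall s, p <= s <= q -> dot2 (be s) (dcurve al s) = 0) ->
  (forall s, p <= s <= q -> norm2 (be s) < 1) ->
  jindex al be p q >
    3 / 2 * arcInt al p q
      (fun s => norm2 (nablaU al (avec al be) s) + norm2 (nablaU al (bvec al be) s)) ->
  let T := length al p q / jindex al be p q in
  exists (P Q : R -> R) (ga : R -> R -> vec2),
    smooth1 P /\ smooth1 Q /\ smooth_map2 ga /\
    P 0 = p /\ Q 0 = q /\ P T = Q T /\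
    (forall t, 0 <= t <= T -> P t <= Q t) /\
    (forall t x, Omega P Q T t x ->
       regular_at ga t x /\ timelike_at ga t x /\ maximal_at ga t x) /\
    (* contains alpha_star and is tangential to V_star = d_t + beta_star along alpha_star *)
    (forall s, p <= s <= q ->
       exists x, Omega P Q T 0 x /\ ga 0 x = al s /\
         exists c1 c2 : R,
           mkV3 1 (fst (be s)) (snd (be s)) =
           v3add (v3scal c1 (Xt ga 0 x)) (v3scal c2 (Xx ga 0 x))) /\
    null_boundary ga P T /\ null_boundary ga Q T.
Proof.
intros Hpq Hal Hbe Hreg Horth Hsm Hj T.
destruct (admissible_near p q al be) as [d0 [Hd0 Hadm0]]; auto.
destruct (smooth_clamp p q d0) as [c0 [Hc0 [Hc0id [Hc0r _]]]]; auto.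
assert (Hc0data : forall s, p <= s <= q -> c0 s = s) by (intros; apply Hc0id; lra).
destruct (transversal_near p q al be Hpq Hal Hbe Hreg Horth Hsm d0 c0) as [d1 [Hd1 Htr]]; auto.
destruct (smooth_clamp p q d1) as [c1 [Hc1 [Hc1id [Hc1r [Hc1lo Hc1hi]]]]]; auto.
eapply maximal_development_of_clamps with (c0 := c0) (c1 := c1); eauto.
intros; apply Hc1id; lra.
Qed.
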